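(* For every node $p \notin S_0$, if $p$ joins at time $t_p^j$ and is active at time $t \geq t_p^j$, then $SysInfo^{[0, \max\{0, t-2D\}]} \subseteq Changes_p^t$.
   Context: Model: asynchronous message passing; an adversary generates at most one Enter($p$), Leave($p$), Crash($p$) signal per node (forced leaves of crashed nodes may be generated at other active nodes and count toward churn). A node is present at $t$ if entered and not left; $N(t)$ is the number present, $N(t)\geq N_{min}$; $S_0$ is the set present at time 0; active = present and not crashed. A message broadcast by $p$ at time $t$ is received within $D$ time by every $q\neq p$ active throughout $[t,t+D]$ ($D$ unknown, no lower bound, FIFO). Churn: for some $\alpha<1$, at most $\alpha N(t)$ nodes enter or leave during any $[t,t+D]$. Failures: for some $\Delta<1$, at any $t$ at most $\Delta N(t)$ present nodes have crashed. Algorithm (CCReg, joining part): node $p$ keeps $Changes_p$ of $enter(q)$, $join(q)$, $leave(q)$ events (initially $\{enter(q),join(q): q\in S_0\}$ if $p\in S_0$, else empty); $Changes_p^t$ is its value at time $t$, and $Present_p=\{q: enter(q)\in Changes_p, leave(q)\notin Changes_p\}$. On Enter($p$) at time $t_p^e$, $p$ adds $enter(p)$ and broadcasts enter; a receiver adds $enter(p)$ and broadcasts an enter-echo with its Changes set (and value, is_joined flag); receivers merge Changes sets from enter-echoes. Upon its first enter-echo from a joined node, $p$ sets $join\_bound:=\gamma|Present_p|$; $p$ joins at time $t_p^j$ (adds $join(p)$, broadcasts joined) once it has received at least $join\_bound$ enter-echoes. Joined messages (sent at $t_q^j$) and leave messages (sent at $t_q^\ell$) cause receivers to add the event and broadcast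 an echo, whose receivers also add it. For an interval $I$, $SysInfo^I=\{enter(q): t_q^e\in I\}\cup\{join(q): t_q^j\in I\}\cup\{leave(q): t_q^\ell\in I\}$. Assumptions: $\alpha\leq 1-2^{-1/4}$; $1<((1-\alpha)^3-\Delta(1+\alpha)^3)N_{min}$; $\gamma \geq \frac{1}{N_{min}(1-\alpha)^3}+(1+\Delta)\frac{(1+\alpha)^3}{(1-\alpha)^3}-1$. *)

(* An execution is a schedule  sched : nat -> Step  of global steps, each
   occurring at real time  T n  (nondecreasing, unbounded, positive).  The
   configuration after the first n steps is computed by [cfg]; the message
   broadcast by step i (if any) is [bcast i], and a receive step names the
   step index of the broadcast it receives. *)
From Stdlib Require Import Reals Lra List Arith PeanoNat Bool.
Import ListNotations.
Open Scope R_scope.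

Definition Node := nat.

Inductive Event : Type :=
| EvEnter : Node -> Event
| EvJoin  : Node -> Event
| EvLeave : Node -> Event.

Definition event_eqb (a b : Event) : bool :=
  match a, b with
  | EvEnter x, EvEnter y => Nat.eqb x y
  | EvJoin x, EvJoin y => Nat.eqb x y
  | EvLeave x, EvLeave y => Nat.eqb x y
  | _, _ => false
  end.

Definition mem_ev (e : Event) (C : list Event) : bool := existsb (event_eqb e) C.

Definition entered_in (C : list Event) : list Node :=
  flat_map (fun e => match e with EvEnter q => [q] | _ => [] end) C.
Definition present_in (C : list Event) : list Node :=
  nodup Nat.eq_dec (filter (fun q => negb (mem_ev (EvLeave q) C)) (entered_in C)).

Inductive Msg : Type :=
| MEnter      : Node -> Msg
| MEnterEcho  : list Event -> bool -> Node -> Msg  (* <enter-echo, Changes, is_joined, q> *)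
| MJoined     : Node -> Msg
| MJoinedEcho : Node -> Msg
| MLeave      : Node -> Msg
| MLeaveEcho  : Node -> Msg.

Record LState := mkLState {
  changes    : list Event;      (* Changes_p (a finite set, as a list) *)
  is_joined  : bool;
  join_bound : option R;
  echo_count : nat              (* enter-echoes received in response to own enter *)
}.

Record Config := mkConfig {
  st       : Node -> LState;
  entered  : Node -> bool;      (* entered (or in S0) *)
  has_left : Node -> bool;
  crashed  : Node -> bool
}.

Definition upd {A : Type} (f : Node -> A) (x : Node) (v : A) : Node -> A :=
  fun y => if Nat.eqb y x then v else f y.

Definition add_changes (s : LState) (C : list Event) : LState :=
  mkLState (changes s ++ C) (is_joined s) (join_bound s) (echo_count s).

Definition set_st (c : Config) (q : Node) (s : LState) : Config :=
  mkConfig (upd (st c) q s) (entered c) (has_left c) (crashed c).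

Definition inS0 (S0 : list Node) (q : Node) : bool := existsb (Nat.eqb q) S0.

Definition init_state (S0 : list Node) (q : Node) : LState :=
  if inS0 S0 q
  then mkLState (flat_map (fun r => [EvEnter r; EvJoin r]) S0) true None 0
  else mkLState [] false None 0.

Definition init_config (S0 : list Node) : Config :=
  mkConfig (init_state S0) (inS0 S0) (fun _ => false) (fun _ => false).

Inductive Step : Type :=
| SEnter       : Node -> Step
| SLeave       : Node -> Step
| SForcedLeave : Node -> Node -> Step  (* SForcedLeave x r : forced leave of crashed x, generated at active r *)
| SCrash       : Node -> Step
| SRecv        : Node -> nat -> Step   (* SRecv q i : q receives the message broadcast at step i *)
| SIdle        : Step.

Definition recv (gamma : R) (c : Config) (q : Node) (m : Msg)
  : Config * option (Node * Msg) :=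
  let s := st c q in
  match m with
  | MEnter x =>
      let s' := add_changes s [EvEnter x] in
      (set_st c q s', Some (q, MEnterEcho (changes s') (is_joined s') x))
  | MEnterEcho C j x =>
      let s1 := add_changes s C in
      if negb (is_joined s1) && Nat.eqb x q then
        let jb := match join_bound s1 with
                  | Some b => Some b
                  | None => if j then Some (gamma * INR (length (present_in (changes s1))))
                            else None
                  end in
        let cnt := S (echo_count s1) in
        match jb with
        | Some b =>
            if Rle_dec b (INR cnt)
            then (set_st c q (mkLState (changes s1 ++ [EvJoin q]) true jb cnt),
                  Some (q, MJoined q))
            else (set_st c q (mkLState (changes s1) false jb cnt), None)
        | None => (set_st c q (mkLState (changes s1) false None cnt), None)
        end
      else (set_st c q s1, None)
  | MJoined x => (set_st c q (add_changes s [EvJoin x]), Some (q, MJoinedEcho x))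
  | MJoinedEcho x => (set_st c q (add_changes s [EvJoin x]), None)
  | MLeave x => (set_st c q (add_changes s [EvLeave x]), Some (q, MLeaveEcho x))
  | MLeaveEcho x => (set_st c q (add_changes s [EvLeave x]), None)
  end.

Definition trans (gamma : R) (c : Config) (bc : nat -> option (Node * Msg)) (s : Step)
  : Config * option (Node * Msg) :=
  match s with
  | SEnter p =>
      let c1 := mkConfig (st c) (upd (entered c) p true) (has_left c) (crashed c) in
      (set_st c1 p (add_changes (st c p) [EvEnter p]), Some (p, MEnter p))
  | SLeave p =>
      (mkConfig (st c) (entered c) (upd (has_left c) p true) (crashed c), Some (p, MLeave p))
  | SForcedLeave x r =>
      let c1 := mkConfig (st c) (entered c) (upd (has_left c) x true) (crashed c) in
      (set_st c1 r (add_changes (st c r) [EvLeave x]), Some (r, MLeave x))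
  | SCrash p =>
      (mkConfig (st c) (entered c) (has_left c) (upd (crashed c) p true), None)
  | SRecv q i =>
      match bc i with
      | Some (_, m) => recv gamma c q m
      | None => (c, None)
      end
  | SIdle => (c, None)
  end.

Fixpoint run (gamma : R) (S0 : list Node) (sched : nat -> Step) (n : nat)
  : Config * (nat -> option (Node * Msg)) :=
  match n with
  | O => (init_config S0, fun _ => None)
  | S k =>
      let '(c, bc) := run gamma S0 sched k in
      let '(c', out) := trans gamma c bc (sched k) in
      (c', fun i => if Nat.eqb i k then out else bc i)
  end.

Definition cfg gamma S0 sched n : Config := fst (run gamma S0 sched n).
Definition bcast gamma S0 sched (i : nat) : option (Node * Msg) :=
  snd (run gamma S0 sched (S i)) i.
Definition sender_of gamma S0 sched (i : nat) : option Node :=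
  option_map fst (bcast gamma S0 sched i).

Definition present (c : Config) (q : Node) : bool := entered c q && negb (has_left c q).
Definition active (c : Config) (q : Node) : bool := present c q && negb (crashed c q).

Definition time_ok (T : nat -> R) : Prop :=
  0 < T O /\ (forall i j, (i <= j)%nat -> T i <= T j) /\ (forall t, exists n, t < T n).

(* n = number of steps occurring at times <= t: the state "at time t" is cfg n *)
Definition cut (T : nat -> R) (t : R) (n : nat) : Prop :=
  (forall k, (k < n)%nat -> T k <= t) /\ t < T n.

Definition active_at gamma S0 sched T (q : Node) (t : R) : Prop :=
  exists n, cut T t n /\ active (cfg gamma S0 sched n) q = true.

Definition step_ok gamma S0 sched (T : nat -> R) (D : R) (n : nat) : Prop :=
  let c := cfg gamma S0 sched n in
  match sched n with
  | SEnter p => inS0 S0 p = false /\ entered c p = false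
  | SLeave p => active c p = true
  | SForcedLeave x r =>
      present c x = true /\ crashed c x = true /\ active c r = true /\ r <> x
  | SCrash p => active c p = true
  | SRecv q i =>
      (i < n)%nat /\
      (exists s m, bcast gamma S0 sched i = Some (s, m) /\ s <> q) /\
      active c q = true /\
      T n <= T i + D /\
      (forall k, (k < n)%nat -> sched k <> SRecv q i) /\
      (* FIFO *)
      (forall k i', (k < n)%nat -> sched k = SRecv q i' ->
         sender_of gamma S0 sched i' = sender_of gamma S0 sched i -> (i' < i)%nat)
  | SIdle => True
  end.

Definition delivery_ok gamma S0 sched (T : nat -> R) (D : R) : Prop :=
  forall i s m, bcast gamma S0 sched i = Some (s, m) ->
  forall q, q <> s ->
  (forall t, T i <= t <= T i + D -> active_at gamma S0 sched T q t) ->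
  exists n, sched n = SRecv q i /\ T n <= T i + D.

Definition card_pred (P : Node -> Prop) (k : nat) : Prop :=
  exists L, NoDup L /\ (forall q, In q L <-> P q) /\ length L = k.

Definition N_at gamma S0 sched T (t : R) (k : nat) : Prop :=
  exists n, cut T t n /\ card_pred (fun q => present (cfg gamma S0 sched n) q = true) k.

Definition Nmin_ok gamma S0 sched T (Nmin : nat) : Prop :=
  forall t k, 0 <= t -> N_at gamma S0 sched T t k -> (Nmin <= k)%nat.

Definition churns_in (sched : nat -> Step) (T : nat -> R) (x : Node) (a b : R) : Prop :=
  exists n, a <= T n <= b /\
    (sched n = SEnter x \/ sched n = SLeave x \/ exists r, sched n = SForcedLeave x r).

Definition churn_ok gamma S0 sched T (D alpha : R) : Prop :=
  forall t k, 0 <= t -> N_at gamma S0 sched T t k ->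
  forall L, NoDup L -> (forall x, In x L -> churns_in sched T x t (t + D)) ->
  INR (length L) <= alpha * INR k.

Definition failures_ok gamma S0 sched T (Delta : R) : Prop :=
  forall t n k, 0 <= t -> cut T t n ->
  card_pred (fun q => present (cfg gamma S0 sched n) q = true) k ->
  forall L, NoDup L ->
  (forall x, In x L -> present (cfg gamma S0 sched n) x = true /\
                       crashed (cfg gamma S0 sched n) x = true) ->
  INR (length L) <= Delta * INR k.

Definition joins_at gamma S0 sched (q : Node) (n : nat) : Prop :=
  is_joined (st (cfg gamma S0 sched n) q) = false /\
  is_joined (st (cfg gamma S0 sched (S n)) q) = true.

Definition event_at gamma S0 sched (n : nat) (ev : Event) : Prop :=
  match ev with
  | EvEnter q => sched n = SEnter q
  | EvJoin q => joins_at gamma S0 sched q n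
  | EvLeave q => sched n = SLeave q \/ exists r, sched n = SForcedLeave q r
  end.

Definition in_SysInfo gamma S0 sched (T : nat -> R) (a b : R) (ev : Event) : Prop :=
  exists n, a <= T n <= b /\ event_at gamma S0 sched n ev.

(* By strong induction on steps, every active node that is in S0 or has joined knows every event
   that happened more than 2D earlier.  An event is broadcast when it happens and rebroadcast by
   every receiver, so a node that entered before the event learns it within D, and a node that
   entered before some node received the broadcast learns it from that node's echo within 2D.
   Otherwise every enter-echo that let the node p join came from a node lacking the event.  The
   first joined node w to answer p's enter knows, by induction, everything older than its answer
   minus 2D; it lacks the event, so it answered within 2D of it, and every node present at
   b = max(0, answer - 2D) is either in the Present set fixing p's join bound or leaves before
   b + 3D.  The echo senders lacking the event entered, left or crashed within [b, b + 3D], and the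
   churn and failure bounds make them fewer than gamma |Present|, a contradiction. *)

From Stdlib Require Import Reals Lra Lia List Arith Bool Classical.
Import ListNotations.
Open Scope R_scope.

Lemma alpha_le_0_16 a : a <= 1 - Rpower 2 (- (1 / 4)) -> a <= 0.16.
Proof.
  intros h. set (y := Rpower 2 (- (1 / 4))) in h.
  assert (hy4 : y ^ 4 = / 2).
  { unfold y. rewrite <- Rpower_pow by apply exp_pos.
    rewrite Rpower_mult.
    replace (- (1 / 4) * INR 4) with (- (1)) by (rewrite INR_IZR_INZ; simpl; field).
    rewrite Rpower_Ropp, Rpower_1 by lra. reflexivity. }
  assert (hy0 : 0 < y) by (unfold y, Rpower; apply exp_pos).
  assert (0.84 <= y); [|lra].
  destruct (Rle_lt_dec 0.84 y) as [h'|h']; auto.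
  assert (y ^ 2 < 0.84 ^ 2) by (simpl; nra).
  assert (y ^ 4 < 0.84 ^ 2 * 0.84 ^ 2)
    by (replace (y ^ 4) with (y ^ 2 * y ^ 2) by ring; simpl in *; nra).
  lra.
Qed.

Lemma growth_coeff_le a De :
  0 <= a -> a <= 0.16 -> 0 <= De -> De * (1 + a) ^ 3 < (1 - a) ^ 3 ->
  (1 + De) * (1 + a) ^ 2 * a <= 1 - 5 * a + 4 * a ^ 2 - a ^ 3.
Proof.
  intros h0 h1 h2 h3.
  assert (hq : 0 < 1 - 6 * a - a ^ 2 - 3 * a ^ 3 - a ^ 4).
  { assert (a ^ 2 <= 0.0256) by (simpl; nra).
    assert (a ^ 3 <= 0.004096) by (simpl; nra).
    assert (a ^ 4 <= 0.00065536) by (simpl; nra).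
    lra. }
  assert (a * (De * (1 + a) ^ 3) <= a * (1 - a) ^ 3) by (apply Rmult_le_compat_l; lra).
  apply (Rmult_le_reg_r (1 + a)); [lra|].
  (* (1 - 5a + 4a^2 - a^3)(1 + a) - a(1 + a)^3 - a(1 - a)^3 is the quartic [hq] *)
  nra.
Qed.

Lemma parameter_facts a De g (Nm : nat) :
  0 <= a -> a <= 1 - Rpower 2 (- (1 / 4)) -> 0 <= De ->
  1 < ((1 - a) ^ 3 - De * (1 + a) ^ 3) * INR Nm ->
  g >= 1 / (INR Nm * (1 - a) ^ 3) + (1 + De) * (1 + a) ^ 3 / (1 - a) ^ 3 - 1 ->
  a <= 0.16 /\ De * (1 + a) ^ 3 < (1 - a) ^ 3 /\ 1 <= INR Nm /\ 0 <= g /\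
  (g + 1) * (1 - a) ^ 3 >= (1 + De) * (1 + a) ^ 3 + 1 / INR Nm.
Proof.
  intros h0 h1 h2 h3 h4.
  pose proof (alpha_le_0_16 a h1) as ha.
  assert (hp : 0 < (1 - a) ^ 3) by (apply pow_lt; lra).
  assert (hN0 : 0 <= INR Nm) by apply pos_INR.
  assert (hpos : 0 < (1 - a) ^ 3 - De * (1 + a) ^ 3).
  { destruct (Rle_lt_dec ((1 - a) ^ 3 - De * (1 + a) ^ 3) 0) as [h|h]; auto.
    assert (((1 - a) ^ 3 - De * (1 + a) ^ 3) * INR Nm <= 0 * INR Nm)
      by (apply Rmult_le_compat_r; lra).
    lra. }
  assert (hN : 1 <= INR Nm).
  { destruct Nm as [|Nm]; [change (INR 0) with 0 in h3; lra|].
    rewrite S_INR. pose proof (pos_INR Nm). lra. }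
  assert (hg : (g + 1) * (1 - a) ^ 3 >= (1 + De) * (1 + a) ^ 3 + 1 / INR Nm).
  { replace ((1 + De) * (1 + a) ^ 3 + 1 / INR Nm) with
      ((1 / (INR Nm * (1 - a) ^ 3) + (1 + De) * (1 + a) ^ 3 / (1 - a) ^ 3 - 1 + 1) * (1 - a) ^ 3)
      by (field; lra).
    apply Rle_ge, Rmult_le_compat_r; lra. }
  repeat split; [assumption|lra|assumption| |exact hg].
  destruct (Rle_lt_dec 0 g) as [h|h]; auto.
  assert ((g + 1) * (1 - a) ^ 3 < 1 * (1 - a) ^ 3) by (apply Rmult_lt_compat_r; lra).
  assert ((1 - a) ^ 3 <= 1) by (rewrite <- (pow1 3); apply pow_incr; lra).
  assert (1 <= (1 + a) ^ 3) by (apply pow_R1_Rle; lra).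
  assert (0 <= De * (1 + a) ^ 3) by (apply Rmult_le_pos; lra).
  assert (0 < 1 / INR Nm) by (apply Rdiv_lt_0_compat; lra). lra.
Qed.

Lemma leaves_bound (a X e1 e2 e3 l1 l2 l3 N0 M1 M2 : R) :
  0 <= a -> a <= 0.16 -> 0 <= e2 -> 0 <= e3 -> 0 <= M1 ->
  e1 + l1 <= a * N0 -> N0 <= X + e1 -> M1 + l1 <= X + e1 ->
  e2 + l2 <= a * M1 -> M2 + l2 <= M1 + e2 -> e3 + l3 <= a * M2 ->
  l1 + l2 + l3 <= (1 - (1 - a) ^ 3) * X - (1 - 5 * a + 4 * a ^ 2 - a ^ 3) * e1.
Proof.
  intros ha0 ha1 he2 he3 hM1 c1 c2 c3 c4 c5 c6.
  assert (a * M2 <= a * (M1 + e2 - l2)) by (apply Rmult_le_compat_l; lra).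
  assert ((1 - a) * l2 <= (1 - a) * (a * M1 - e2)) by (apply Rmult_le_compat_l; lra).
  assert (0 <= (1 - 2 * a) * e2) by (apply Rmult_le_pos; lra).
  assert (l2 + l3 <= (2 * a - a ^ 2) * M1) by (simpl; lra).
  assert ((2 * a - a ^ 2) * M1 <= (2 * a - a ^ 2) * (X + e1 - l1))
    by (apply Rmult_le_compat_l; simpl; nra).
  assert (a * N0 <= a * (X + e1)) by (apply Rmult_le_compat_l; lra).
  assert ((1 - a) ^ 2 * l1 <= (1 - a) ^ 2 * (a * (X + e1) - e1))
    by (apply Rmult_le_compat_l; [simpl; nra|lra]).
  simpl in *. lra.
Qed.

Lemma entries_crashes_bound (a De X e1 e2 e3 l2 l3 M1 M2 Ns Cr : R) :
  0 <= a -> 0 <= De -> 0 <= l2 -> 0 <= l3 -> M1 <= X + e1 ->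
  e2 + l2 <= a * M1 -> M2 + l2 <= M1 + e2 -> e3 + l3 <= a * M2 ->
  Cr <= De * Ns -> Ns <= M1 + e2 + e3 ->
  e2 + e3 + Cr <= ((1 + De) * (1 + a) ^ 2 - 1) * (X + e1).
Proof.
  intros ha hDe hl2 hl3 hM1 c1 c2 c3 c4 c5.
  assert (hM2 : M2 <= (1 + a) * M1) by lra.
  assert (a * M2 <= a * ((1 + a) * M1)) by (apply Rmult_le_compat_l; lra).
  assert (hNs : Ns <= (1 + a) ^ 2 * M1) by (simpl; lra).
  assert (De * Ns <= De * ((1 + a) ^ 2 * M1)) by (apply Rmult_le_compat_l; lra).
  assert (((1 + De) * (1 + a) ^ 2 - 1) * M1 <= ((1 + De) * (1 + a) ^ 2 - 1) * (X + e1)).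
  { apply Rmult_le_compat_l; [|lra].
    assert (1 <= (1 + a) ^ 2) by (apply pow_R1_Rle; lra).
    assert (0 <= De * (1 + a) ^ 2) by (apply Rmult_le_pos; lra). lra. }
  simpl in *. lra.
Qed.

(* Counts around a window [b, b + 3D]: X and N0 nodes present just before and at b, M1 and M2 at
   b + D and b + 2D; e_i and l_i nodes entering and leaving in the i-th slice of length D; L nodes
   present before b that leave in the window; Ns and Cr nodes present and crashed at the event
   time plus D; P the Present set fixing the join bound; S the enter-echo senders. *)
Lemma join_count_contradiction
  (a De g Nm X L e1 e2 e3 l1 l2 l3 N0 M1 M2 Ns Cr P S : R) :
  0 <= a -> a <= 0.16 -> 0 <= De -> De * (1 + a) ^ 3 < (1 - a) ^ 3 -> 1 <= Nm -> 0 <= g ->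
  (g + 1) * (1 - a) ^ 3 >= (1 + De) * (1 + a) ^ 3 + 1 / Nm ->
  Nm <= X ->
  0 <= e1 -> 0 <= e2 -> 0 <= e3 -> 0 <= l1 -> 0 <= l2 -> 0 <= l3 -> 0 <= M1 ->
  e1 + l1 <= a * N0 -> N0 <= X + e1 -> M1 + l1 <= X + e1 ->
  e2 + l2 <= a * M1 -> M2 + l2 <= M1 + e2 -> e3 + l3 <= a * M2 ->
  Cr <= De * Ns -> Ns <= M1 + e2 + e3 ->
  L <= l1 + l2 + l3 -> X <= P + L ->
  g * P <= S -> S <= e1 + e2 + e3 + L + Cr -> False.
Proof.
  intros ha0 ha1 hDe hDe3 hNm hg0 hg hX he1 he2 he3 hl1 hl2 hl3 hM1
    c1 c2 c3 c4 c5 c6 c7 c8 hL hP hgP hS.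
  pose proof (leaves_bound a X e1 e2 e3 l1 l2 l3 N0 M1 M2 ha0 ha1 he2 he3 hM1 c1 c2 c3 c4 c5 c6)
    as hl.
  pose proof (entries_crashes_bound a De X e1 e2 e3 l2 l3 M1 M2 Ns Cr ha0 hDe hl2 hl3
    ltac:(lra) c4 c5 c6 c7 c8) as hE.
  pose proof (growth_coeff_le a De ha0 ha1 hDe hDe3) as hc.
  set (c := 1 - 5 * a + 4 * a ^ 2 - a ^ 3) in *.
  set (l := l1 + l2 + l3) in *.
  set (p3 := (1 - a) ^ 3) in *. set (q2 := (1 + a) ^ 2) in *.
  assert (hq3 : (1 + a) ^ 3 = q2 * (1 + a)) by (unfold q2; ring).
  rewrite hq3 in hg, hDe3.
  assert (hp3 : 0 < p3) by (unfold p3; apply pow_lt; lra).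
  assert (hq2 : 1 <= q2) by (unfold q2; apply pow_R1_Rle; lra).
  assert (hc0 : 0 <= c).
  { assert (0 <= (1 + De) * q2 * a) by (repeat apply Rmult_le_pos; lra). lra. }
  assert (hXN : 1 <= X * (1 / Nm)).
  { apply (Rmult_le_reg_r Nm); [lra|].
    replace (X * (1 / Nm) * Nm) with X by (field; lra). lra. }
  assert (hsend : (g + 1) * (X - l) <= (1 + De) * q2 * (X + e1)).
  { assert (g * (X - L) <= g * P) by (apply Rmult_le_compat_l; lra).
    assert (g * (X - l) <= g * (X - L)) by (apply Rmult_le_compat_l; lra).
    lra. }
  assert (hlow : ((1 + De) * (q2 * (1 + a)) + 1 / Nm) * X + c * e1 <= (g + 1) * (X - l)).
  { assert ((g + 1) * (p3 * X + c * e1) <= (g + 1) * (X - l)) by (apply Rmult_le_compat_l; lra).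
    assert (1 * (c * e1) <= (g + 1) * (c * e1))
      by (apply Rmult_le_compat_r; [apply Rmult_le_pos|]; lra).
    assert (((1 + De) * (q2 * (1 + a)) + 1 / Nm) * X <= (g + 1) * p3 * X)
      by (apply Rmult_le_compat_r; lra).
    lra. }
  assert (hup : (1 + De) * q2 * (X + e1) <= (1 + De) * (q2 * (1 + a)) * X + c * e1).
  { assert (a * N0 <= a * (X + e1)) by (apply Rmult_le_compat_l; lra).
    assert ((1 + De) * q2 * ((1 - a) * e1) <= (1 + De) * q2 * (a * X))
      by (apply Rmult_le_compat_l; [apply Rmult_le_pos|]; lra).
    assert ((1 + De) * q2 * a * e1 <= c * e1) by (apply Rmult_le_compat_r; lra).
    lra. }
  lra.
Qed.

Lemma entered_in_iff y l : In y (entered_in l) <-> In (EvEnter y) l.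
Proof.
  unfold entered_in. rewrite in_flat_map. split.
  - intros [[z|z|z] [he hy]]; simpl in hy; try contradiction. destruct hy as [<-|[]]; auto.
  - intros h. exists (EvEnter y). simpl; auto.
Qed.

Lemma event_eqb_iff a b : event_eqb a b = true <-> a = b.
Proof.
  destruct a, b; simpl; split; intros h; try discriminate;
    try (apply Nat.eqb_eq in h; subst; auto); try (inversion h; subst; apply Nat.eqb_refl).
Qed.

Lemma mem_ev_iff e l : mem_ev e l = true <-> In e l.
Proof.
  unfold mem_ev. rewrite existsb_exists. split.
  - intros [x [h1 h2]]. apply event_eqb_iff in h2. subst; auto.
  - intros h. exists e. split; auto. apply event_eqb_iff; auto.
Qed.

Lemma present_in_iff y l : In y (present_in l) <-> In (EvEnter y) l /\ ~ In (EvLeave y) l.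
Proof.
  unfold present_in. rewrite nodup_In, filter_In, entered_in_iff, negb_true_iff.
  split; intros [h1 h2]; split; auto.
  - intros h. apply mem_ev_iff in h. congruence.
  - destruct (mem_ev (EvLeave y) l) eqn:E; auto. apply mem_ev_iff in E. contradiction.
Qed.

Lemma NoDup_length_le_app {A} (l a b : list A) :
  NoDup l -> (forall y, In y l -> In y a \/ In y b) -> (length l <= length a + length b)%nat.
Proof.
  intros hl hin. rewrite <- length_app. apply NoDup_incl_length; auto.
  intros y hy. apply in_app_iff. auto.
Qed.

Lemma NoDup_length_le_app3 {A} (l a b c : list A) :
  NoDup l -> (forall y, In y l -> In y a \/ In y b \/ In y c) ->
  (length l <= length a + length b + length c)%nat.
Proof.
  intros hl hin. rewrite <- length_app. apply NoDup_length_le_app; auto.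
  intros y hy. rewrite in_app_iff. firstorder.
Qed.

Lemma active_split c q :
  active c q = true <-> entered c q = true /\ has_left c q = false /\ crashed c q = false.
Proof.
  unfold active, present.
  destruct (entered c q), (has_left c q), (crashed c q); simpl; intuition congruence.
Qed.

Lemma present_split c y : present c y = true <-> entered c y = true /\ has_left c y = false.
Proof. unfold present. destruct (entered c y), (has_left c y); simpl; intuition congruence. Qed.

Definition state_extends (s s' : LState) : Prop :=
  (exists l, changes s' = changes s ++ l) /\
  (is_joined s = true -> is_joined s' = true) /\
  (forall b, join_bound s = Some b -> join_bound s' = Some b).

Lemma state_extends_refl s : state_extends s s.
Proof. split; [exists []; symmetry; apply app_nil_r|auto]. Qed.

Lemma state_extends_trans s1 s2 s3 :
  state_extends s1 s2 -> state_extends s2 s3 -> state_extends s1 s3.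
Proof.
  intros [[l1 h1] [j1 b1]] [[l2 h2] [j2 b2]].
  split; [exists (l1 ++ l2); rewrite h2, h1, app_assoc; reflexivity|auto].
Qed.

Lemma state_extends_upd (f : Node -> LState) q s' z :
  state_extends (f q) s' -> state_extends (f z) (upd f q s' z).
Proof.
  unfold upd. destruct (Nat.eqb_spec z q) as [->|_]; auto using state_extends_refl.
Qed.

Lemma trans_state_extends gamma c b s z :
  state_extends (st c z) (st (fst (trans gamma c b s)) z).
Proof.
  destruct s as [p|p|y r|p|q i|]; simpl; try apply state_extends_refl;
    try (apply state_extends_upd; split; [eexists; reflexivity|auto]).
  destruct (b i) as [[x m]|]; [|apply state_extends_refl].
  unfold recv. destruct m as [y|C j y|y|y|y|y]; simpl;
    try (apply state_extends_upd; split; [eexists; reflexivity|auto]).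
  destruct (negb (is_joined (st c q)) && Nat.eqb y q) eqn:E;
    [|apply state_extends_upd; split; [eexists; reflexivity|auto]].
  apply andb_true_iff in E as [E _]. apply negb_true_iff in E.
  destruct (join_bound (st c q)) eqn:Ejb; [|destruct j];
    repeat (destruct (Rle_dec _ _)); simpl;
    (apply state_extends_upd; split; [|split]); simpl;
    try (rewrite E; discriminate); try (rewrite Ejb; congruence);
    try (eexists; rewrite <- app_assoc; reflexivity); eexists; reflexivity.
Qed.

Lemma trans_flags_mono gamma c b s x :
  let c' := fst (trans gamma c b s) in
  (entered c x = true -> entered c' x = true) /\
  (has_left c x = true -> has_left c' x = true) /\
  (crashed c x = true -> crashed c' x = true).
Proof.
  destruct s; simpl; unfold recv;
    repeat (match goal with |- context [match ?x with _ => _ end] => destruct x end; simpl);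
    unfold upd; repeat split; intros;
    repeat (match goal with |- context [Nat.eqb ?a ?b] => destruct (Nat.eqb a b) end); auto.
Qed.

Lemma trans_flags_origin gamma c b s y :
  let c' := fst (trans gamma c b s) in
  (entered c' y = true -> entered c y = true \/ s = SEnter y) /\
  (has_left c' y = true -> has_left c y = true \/ s = SLeave y \/ exists r, s = SForcedLeave y r).
Proof.
  destruct s as [p|p|x r|p|q i|]; simpl; unfold upd;
    try (split; intros H; destruct (Nat.eqb_spec y p); subst; eauto; fail); [| |auto].
  - split; intros H; destruct (Nat.eqb_spec y x); subst; eauto.
  - unfold recv. destruct (b i) as [[z [u|C j u|u|u|u|u]]|]; simpl; auto.
    destruct (negb (is_joined (st c q)) && Nat.eqb u q); simpl; auto.
    destruct (join_bound (st c q)); [|destruct j]; simpl; auto;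
      destruct (Rle_dec _ _); simpl; auto.
Qed.

Definition msg_events (M : Msg) : list Event :=
  match M with
  | MEnter y => [EvEnter y] | MEnterEcho C _ _ => C
  | MJoined y => [EvJoin y] | MJoinedEcho y => [EvJoin y]
  | MLeave y => [EvLeave y] | MLeaveEcho y => [EvLeave y]
  end.

Lemma trans_bcast_spec gamma c b s sg M : snd (trans gamma c b s) = Some (sg, M) ->
  match M with
  | MEnter y => s = SEnter y /\ sg = y
  | MEnterEcho C j y => exists i x, s = SRecv sg i /\ b i = Some (x, MEnter y) /\
      C = changes (st c sg) ++ [EvEnter y] /\ j = is_joined (st c sg)
  | MJoined y => sg = y /\ exists i x C j, s = SRecv y i /\ b i = Some (x, MEnterEcho C j y)
  | MJoinedEcho y => exists i x, s = SRecv sg i /\ b i = Some (x, MJoined y)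
  | MLeave y => (s = SLeave y /\ sg = y) \/ s = SForcedLeave y sg
  | MLeaveEcho y => exists i x, s = SRecv sg i /\ b i = Some (x, MLeave y)
  end.
Proof.
  destruct s as [p|p|y r|p|q i|]; simpl; intros H; try discriminate;
    try (inversion H; subst; auto; fail).
  destruct (b i) as [[x [y|C j y|y|y|y|y]]|] eqn:Eb; simpl in H; try discriminate;
    try (inversion H; subst; simpl; eauto 10; fail).
  destruct (negb (is_joined (st c q)) && Nat.eqb y q) eqn:E; [|discriminate].
  apply andb_true_iff in E as [_ E]. apply Nat.eqb_eq in E. subst y.
  destruct (join_bound (st c q)); [|destruct j]; simpl in H;
    try (destruct (Rle_dec _ _); simpl in H); try discriminate;
    inversion H; subst; split; eauto 10.
Qed.

Lemma trans_recv_spec gamma c b q i x M :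
  b i = Some (x, M) ->
  let r := trans gamma c b (SRecv q i) in
  incl (msg_events M) (changes (st (fst r) q)) /\
  match M with
  | MEnter y =>
      snd r = Some (q, MEnterEcho (changes (st c q) ++ [EvEnter y]) (is_joined (st c q)) y)
  | MJoined y => snd r = Some (q, MJoinedEcho y)
  | MLeave y => snd r = Some (q, MLeaveEcho y)
  | _ => True
  end.
Proof.
  intros Hb. simpl. rewrite Hb. unfold recv.
  destruct M as [y|C j y|y|y|y|y]; simpl; unfold upd; rewrite ?Nat.eqb_refl; simpl;
    try (split; auto; intros e [<-|[]]; apply in_or_app; simpl; auto; fail).
  destruct (negb (is_joined (st c q)) && Nat.eqb y q); simpl;
    [destruct (join_bound (st c q)); [|destruct j]; simpl;
     try (destruct (Rle_dec _ _); simpl)|];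
    unfold upd; rewrite ?Nat.eqb_refl; simpl; split; auto; intros e He; rewrite ?in_app_iff; auto.
Qed.

Definition is_own_echo_recv (b : nat -> option (Node * Msg)) (s : Step) (q : Node) : bool :=
  match s with
  | SRecv q' i =>
      Nat.eqb q' q && match b i with Some (_, MEnterEcho _ _ y) => Nat.eqb y q | _ => false end
  | _ => false
  end.

Lemma trans_echo_count_le gamma c b s q :
  (echo_count (st (fst (trans gamma c b s)) q)
     <= echo_count (st c q) + (if is_own_echo_recv b s q then 1 else 0))%nat.
Proof.
  destruct s as [p|p|y r|p|n i|]; simpl; unfold upd, add_changes;
    try (destruct (Nat.eqb_spec q p); subst; simpl; lia);
    try (destruct (Nat.eqb_spec q r); subst; simpl; lia); try lia.
  destruct (b i) as [[x [y|C j y|y|y|y|y]]|]; simpl; try lia; unfold recv, upd;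
    try (destruct (Nat.eqb_spec q n); subst; simpl; lia).
  destruct (negb (is_joined (st c n)) && Nat.eqb y n) eqn:E.
  - apply andb_true_iff in E as [_ E]. apply Nat.eqb_eq in E. subst y.
    destruct (join_bound (st c n)); [|destruct j]; simpl;
      try (destruct (Rle_dec _ _); simpl); unfold upd;
      destruct (Nat.eqb_spec q n); subst; simpl; rewrite ?Nat.eqb_refl; simpl; lia.
  - simpl. unfold upd. destruct (Nat.eqb_spec q n); subst; simpl; lia.
Qed.

Lemma trans_join_spec gamma c b s q :
  let c' := fst (trans gamma c b s) in
  is_joined (st c q) = false -> is_joined (st c' q) = true ->
  (exists i x C j, s = SRecv q i /\ b i = Some (x, MEnterEcho C j q)) /\
  snd (trans gamma c b s) = Some (q, MJoined q) /\
  In (EvJoin q) (changes (st c' q)) /\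
  exists bb, join_bound (st c' q) = Some bb /\ bb <= INR (echo_count (st c' q)).
Proof.
  intros c' H0 H1. subst c'.
  destruct s as [p|p|y r|p|n i|]; simpl in *; unfold upd, add_changes in *;
    try (destruct (Nat.eqb_spec q p); subst; simpl in *; congruence);
    try (destruct (Nat.eqb_spec q r); subst; simpl in *; congruence); try congruence.
  destruct (b i) as [[x [y|C j y|y|y|y|y]]|] eqn:Eb; simpl in *; try congruence;
    unfold recv, upd in *; try (destruct (Nat.eqb_spec q n); subst; simpl in *; congruence).
  destruct (negb (is_joined (st c n)) && Nat.eqb y n) eqn:E.
  - apply andb_true_iff in E as [_ E]. apply Nat.eqb_eq in E. subst y.
    destruct (join_bound (st c n)) eqn:Ej; [|destruct j]; simpl in *;
      try (destruct (Rle_dec _ _); simpl in *); unfold upd in *;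
      destruct (Nat.eqb_spec q n); subst; simpl in *; try congruence;
      (split; [eauto 10|]; split; [auto|]; split; [apply in_or_app; simpl; auto|];
       eexists; split; [reflexivity|auto]).
  - simpl in *. unfold upd in *. destruct (Nat.eqb_spec q n); subst; simpl in *; congruence.
Qed.

Lemma trans_join_bound_spec gamma c b s q bb :
  join_bound (st c q) = None -> join_bound (st (fst (trans gamma c b s)) q) = Some bb ->
  exists i x C, s = SRecv q i /\ b i = Some (x, MEnterEcho C true q) /\
    bb = gamma * INR (length (present_in (changes (st c q) ++ C))).
Proof.
  intros H0 H1.
  destruct s as [p|p|y r|p|n i|]; simpl in *; unfold upd, add_changes in *;
    try (destruct (Nat.eqb_spec q p); subst; simpl in *; congruence);
    try (destruct (Nat.eqb_spec q r); subst; simpl in *; congruence); try congruence.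
  destruct (b i) as [[x [y|C j y|y|y|y|y]]|] eqn:Eb; simpl in *; try congruence;
    unfold recv, upd in *; try (destruct (Nat.eqb_spec q n); subst; simpl in *; congruence).
  destruct (negb (is_joined (st c n)) && Nat.eqb y n) eqn:E.
  - apply andb_true_iff in E as [_ E]. apply Nat.eqb_eq in E. subst y.
    destruct (join_bound (st c n)) eqn:Ej; [|destruct j]; simpl in *;
      try (destruct (Rle_dec _ _); simpl in *); unfold upd in *;
      destruct (Nat.eqb_spec q n); subst; simpl in *; try congruence;
      inversion H1; subst; eauto 10.
  - simpl in *. unfold upd in *. destruct (Nat.eqb_spec q n); subst; simpl in *; congruence.
Qed.

Lemma trans_changes_origin gamma c b s z e :
  In e (changes (st (fst (trans gamma c b s)) z)) ->
  In e (changes (st c z)) \/ (s = SEnter z /\ e = EvEnter z) \/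
  (exists y, s = SForcedLeave y z /\ e = EvLeave y) \/
  (exists i x M, s = SRecv z i /\ b i = Some (x, M) /\ (In e (msg_events M) \/ e = EvJoin z)).
Proof.
  destruct s as [p|p|y r|p|n i|]; simpl; unfold upd, add_changes; auto.
  - destruct (Nat.eqb_spec z p); subst; simpl; auto. rewrite in_app_iff. intros [h|[h|[]]]; auto.
  - destruct (Nat.eqb_spec z r); subst; simpl; auto. rewrite in_app_iff.
    intros [h|[h|[]]]; auto. right; right; left. exists y. auto.
  - destruct (b i) as [[x m]|] eqn:Eb; simpl; auto. unfold recv.
    destruct m as [y|C j y|y|y|y|y]; simpl; unfold upd, add_changes;
      try (destruct (Nat.eqb_spec z n); subst; simpl; auto; rewrite in_app_iff; intros [h|h]; auto;
           right; right; right; exists i, x; eexists; split; [reflexivity|];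
           split; [eauto|]; simpl; auto; fail).
    destruct (negb (is_joined (st c n)) && Nat.eqb y n).
    + destruct (join_bound (st c n)); [|destruct j]; simpl;
        try (destruct (Rle_dec _ _); simpl); unfold upd;
        destruct (Nat.eqb_spec z n); subst; simpl; auto; intros h;
        rewrite ?in_app_iff in h; simpl in h; (decompose [or] h; [left; assumption|..]);
        right; right; right; exists i, x; eexists; (split; [reflexivity|]);
        (split; [eauto|]); simpl; intuition congruence.
    + simpl; unfold upd. destruct (Nat.eqb_spec z n); subst; simpl; auto.
      rewrite in_app_iff. intros [h|h]; auto.
      right; right; right; exists i, x; eexists; (split; [reflexivity|]);
        (split; [eauto|]); simpl; auto.
Qed.

Section Execution.
Variables (gamma : R) (S0 : list Node) (sched : nat -> Step).

Definition cf n := cfg gamma S0 sched n.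
Definition bc i := bcast gamma S0 sched i.
Definition bc_prefix n := snd (run gamma S0 sched n).

Lemma cf_succ n : cf (S n) = fst (trans gamma (cf n) (bc_prefix n) (sched n)).
Proof.
  unfold cf, cfg, bc_prefix. simpl. destruct (run gamma S0 sched n) as [c b]. simpl.
  destruct (trans gamma c b (sched n)). reflexivity.
Qed.

Lemma bc_step n : bc n = snd (trans gamma (cf n) (bc_prefix n) (sched n)).
Proof.
  unfold bc, bcast, cf, cfg, bc_prefix. simpl. destruct (run gamma S0 sched n) as [c b]. simpl.
  destruct (trans gamma c b (sched n)). simpl. rewrite Nat.eqb_refl. reflexivity.
Qed.

Lemma bc_prefix_lt n i : (i < n)%nat -> bc_prefix n i = bc i.
Proof.
  induction n as [|n IH]; intros H; [lia|].
  unfold bc_prefix, bc, bcast in *. simpl.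
  destruct (run gamma S0 sched n) as [c b] eqn:E.
  destruct (trans gamma c b (sched n)) as [c' o] eqn:E2. simpl.
  destruct (Nat.eqb_spec i n) as [->|hne].
  - simpl. rewrite E, E2. simpl. rewrite Nat.eqb_refl. reflexivity.
  - apply IH. lia.
Qed.

Lemma cf_state_extends n m z : (n <= m)%nat -> state_extends (st (cf n) z) (st (cf m) z).
Proof.
  induction 1 as [|m _ IH]; [apply state_extends_refl|].
  eapply state_extends_trans; [exact IH|]. rewrite cf_succ. apply trans_state_extends.
Qed.

Lemma changes_mono n m z e :
  (n <= m)%nat -> In e (changes (st (cf n) z)) -> In e (changes (st (cf m) z)).
Proof.
  intros H. destruct (cf_state_extends n m z H) as [[l ->] _]. intros he. apply in_or_app; auto.
Qed.

Lemma joined_mono n m z :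
  (n <= m)%nat -> is_joined (st (cf n) z) = true -> is_joined (st (cf m) z) = true.
Proof. intros H. apply (cf_state_extends n m z H). Qed.

Lemma join_bound_mono n m z b :
  (n <= m)%nat -> join_bound (st (cf n) z) = Some b -> join_bound (st (cf m) z) = Some b.
Proof. intros H. apply (cf_state_extends n m z H). Qed.

Lemma flags_mono n m x : (n <= m)%nat ->
  (entered (cf n) x = true -> entered (cf m) x = true) /\
  (has_left (cf n) x = true -> has_left (cf m) x = true) /\
  (crashed (cf n) x = true -> crashed (cf m) x = true).
Proof.
  induction 1 as [|m _ IH]; [tauto|].
  rewrite cf_succ.
  destruct (trans_flags_mono gamma (cf m) (bc_prefix m) (sched m) x) as [? [? ?]]. tauto.
Qed.

Lemma entered_mono n m x : (n <= m)%nat -> entered (cf n) x = true -> entered (cf m) x = true.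
Proof. intros H. apply (flags_mono n m x H). Qed.

Lemma left_mono n m x : (n <= m)%nat -> has_left (cf n) x = true -> has_left (cf m) x = true.
Proof. intros H. apply (flags_mono n m x H). Qed.

Lemma crashed_mono n m x : (n <= m)%nat -> crashed (cf n) x = true -> crashed (cf m) x = true.
Proof. intros H. apply (flags_mono n m x H). Qed.

End Execution.

Section AdmissibleExecution.
Variables (S0 : list Node) (sched : nat -> Step) (T : nat -> R)
  (D alpha Delta gamma : R) (Nmin : nat).
Hypothesis HD : 0 < D.
Hypothesis Htime : time_ok T.
Hypothesis Hstep : forall n, step_ok gamma S0 sched T D n.
Hypothesis Hdel : delivery_ok gamma S0 sched T D.
Hypothesis HNmin : Nmin_ok gamma S0 sched T Nmin.
Hypothesis Hchurn : churn_ok gamma S0 sched T D alpha.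
Hypothesis Hfail : failures_ok gamma S0 sched T Delta.

Notation C n := (cf gamma S0 sched n).
Notation B i := (bc gamma S0 sched i).

Lemma T_mono i j : (i <= j)%nat -> T i <= T j.
Proof. destruct Htime as [_ [H _]]. auto. Qed.

Lemma T_pos i : 0 < T i.
Proof. destruct Htime as [H0 [H _]]. pose proof (H 0%nat i ltac:(lia)). lra. Qed.

Lemma T_lt_index i j : T i < T j -> (i < j)%nat.
Proof. intros H. destruct (le_lt_dec j i) as [h|h]; auto. pose proof (T_mono j i h). lra. Qed.

Lemma cut_spec t n : cut T t n -> forall j, (j < n)%nat <-> T j <= t.
Proof.
  intros [H1 H2] j. split; auto. intros Hj.
  destruct (le_lt_dec n j) as [h|h]; auto. pose proof (T_mono n j h). lra.
Qed.

Lemma cut_after t n : cut T t n -> forall j, (n <= j)%nat -> t < T j.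
Proof.
  intros hc j hj. destruct (Rle_lt_dec (T j) t) as [h|h]; auto.
  apply (cut_spec t n hc) in h. lia.
Qed.

Lemma cut_mono t1 t2 n1 n2 : t1 <= t2 -> cut T t1 n1 -> cut T t2 n2 -> (n1 <= n2)%nat.
Proof.
  intros h h1 h2. destruct (le_lt_dec n1 n2) as [l|l]; auto.
  apply (cut_spec t1 n1 h1) in l. destruct h2 as [_ h2]. lra.
Qed.

Lemma cut_unique t n m : cut T t n -> cut T t m -> n = m.
Proof.
  intros H1 H2. pose proof (cut_mono t t n m (Rle_refl t) H1 H2).
  pose proof (cut_mono t t m n (Rle_refl t) H2 H1). lia.
Qed.

Lemma cut_exists t : exists n, cut T t n.
Proof.
  destruct Htime as [_ [_ Hu]]. destruct (Hu t) as [N HN].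
  induction N as [|N IH].
  - exists 0%nat. split; [intros; lia|auto].
  - destruct (Rlt_le_dec t (T N)) as [h|h]; auto.
    exists (S N). split; auto. intros k Hk. pose proof (T_mono k N ltac:(lia)). lra.
Qed.

Lemma cut_strict_exists b : exists n, forall j, (j < n)%nat <-> T j < b.
Proof.
  destruct Htime as [_ [_ Hu]]. destruct (Hu b) as [N HN].
  assert (HN' : b <= T N) by lra. clear HN.
  induction N as [|N IH].
  - exists 0%nat. intros j; split; intros h; [lia|]. pose proof (T_mono 0 j ltac:(lia)). lra.
  - destruct (Rlt_le_dec (T N) b) as [h|h]; auto.
    exists (S N). intros j. split; intros h2.
    + pose proof (T_mono j N ltac:(lia)). lra.
    + destruct (le_lt_dec (S N) j) as [l|l]; [|lia]. pose proof (T_mono (S N) j l). lra.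
Qed.

Lemma active_at_cut t q n : cut T t n -> (active_at gamma S0 sched T q t <-> active (C n) q = true).
Proof.
  intros H. split.
  - intros [n' [h1 h2]]. rewrite (cut_unique t n n' H h1). exact h2.
  - intros h. exists n. split; auto.
Qed.

Lemma recv_step_ok n q i : sched n = SRecv q i ->
  (i < n)%nat /\ (exists s m, B i = Some (s, m) /\ s <> q) /\ active (C n) q = true /\
  T n <= T i + D /\ (forall k, (k < n)%nat -> sched k <> SRecv q i).
Proof.
  intros H. pose proof (Hstep n) as Hs. unfold step_ok in Hs. rewrite H in Hs.
  destruct Hs as [h1 [h2 [h3 [h4 [h5 _]]]]]. repeat split; auto.
Qed.

Lemma recv_unique n m q i : sched n = SRecv q i -> sched m = SRecv q i -> n = m.
Proof.
  intros H1 H2. destruct (lt_eq_lt_dec n m) as [[h|h]|h]; auto; exfalso.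
  - destruct (recv_step_ok m q i H2) as [_ [_ [_ [_ h5]]]]. exact (h5 n h H1).
  - destruct (recv_step_ok n q i H1) as [_ [_ [_ [_ h5]]]]. exact (h5 m h H2).
Qed.

Lemma bc_prefix_recv n q i : sched n = SRecv q i -> bc_prefix gamma S0 sched n i = B i.
Proof. intros H. apply bc_prefix_lt, (recv_step_ok n q i H). Qed.

Lemma bc_spec n sg M : B n = Some (sg, M) ->
  match M with
  | MEnter y => sched n = SEnter y /\ sg = y
  | MEnterEcho Cs j y => exists i x, (i < n)%nat /\ sched n = SRecv sg i /\
      B i = Some (x, MEnter y) /\ Cs = changes (st (C n) sg) ++ [EvEnter y] /\
      j = is_joined (st (C n) sg)
  | MJoined y => sg = y /\ exists i x Cs j, (i < n)%nat /\ sched n = SRecv y i /\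
      B i = Some (x, MEnterEcho Cs j y)
  | MJoinedEcho y => exists i x, (i < n)%nat /\ sched n = SRecv sg i /\ B i = Some (x, MJoined y)
  | MLeave y => (sched n = SLeave y /\ sg = y) \/ sched n = SForcedLeave y sg
  | MLeaveEcho y => exists i x, (i < n)%nat /\ sched n = SRecv sg i /\ B i = Some (x, MLeave y)
  end.
Proof.
  intros H. unfold bc in H. rewrite bc_step in H. apply trans_bcast_spec in H.
  destruct M; auto.
  - destruct H as [i [x [h1 h2]]]. rewrite (bc_prefix_recv n _ _ h1) in h2.
    exists i, x. split; [apply (recv_step_ok n _ _ h1)|auto].
  - destruct H as [h0 [i [x [C' [j [h1 h2]]]]]]. rewrite (bc_prefix_recv n _ _ h1) in h2.
    split; auto. exists i, x, C', j. split; [apply (recv_step_ok n _ _ h1)|auto].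
  - destruct H as [i [x [h1 h2]]]. rewrite (bc_prefix_recv n _ _ h1) in h2.
    exists i, x. split; [apply (recv_step_ok n _ _ h1)|auto].
  - destruct H as [i [x [h1 h2]]]. rewrite (bc_prefix_recv n _ _ h1) in h2.
    exists i, x. split; [apply (recv_step_ok n _ _ h1)|auto].
Qed.

Lemma recv_effect n q i x M : sched n = SRecv q i -> B i = Some (x, M) ->
  incl (msg_events M) (changes (st (C (S n)) q)) /\
  match M with
  | MEnter y =>
      B n = Some (q, MEnterEcho (changes (st (C n) q) ++ [EvEnter y]) (is_joined (st (C n) q)) y)
  | MJoined y => B n = Some (q, MJoinedEcho y)
  | MLeave y => B n = Some (q, MLeaveEcho y)
  | _ => True
  end.
Proof.
  intros H1 H2. rewrite <- (bc_prefix_recv n q i H1) in H2.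
  pose proof (trans_recv_spec gamma (C n) (bc_prefix gamma S0 sched n) q i x M H2) as [A A'].
  unfold bc. rewrite cf_succ, bc_step, H1. split; auto.
Qed.

Lemma recv_knows j q i x M ev : sched j = SRecv q i -> B i = Some (x, M) -> In ev (msg_events M) ->
  forall m, (S j <= m)%nat -> In ev (changes (st (C m) q)).
Proof.
  intros h1 h2 h3 m hm. apply (changes_mono gamma S0 sched (S j)); auto.
  apply (recv_effect j q i x M h1 h2); auto.
Qed.

Lemma enter_effect n y : sched n = SEnter y ->
  inS0 S0 y = false /\ entered (C n) y = false /\ entered (C (S n)) y = true /\
  In (EvEnter y) (changes (st (C (S n)) y)) /\ B n = Some (y, MEnter y).
Proof.
  intros H. pose proof (Hstep n) as Hs. unfold step_ok in Hs. rewrite H in Hs.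
  destruct Hs as [h1 h2]. unfold bc. rewrite cf_succ, bc_step, H. simpl.
  unfold upd. rewrite Nat.eqb_refl. simpl. repeat split; auto. apply in_or_app; simpl; auto.
Qed.

Lemma leave_effect n y : sched n = SLeave y ->
  active (C n) y = true /\ has_left (C (S n)) y = true /\ B n = Some (y, MLeave y).
Proof.
  intros H. pose proof (Hstep n) as Hs. unfold step_ok in Hs. rewrite H in Hs.
  unfold bc. rewrite cf_succ, bc_step, H. simpl. unfold upd. rewrite Nat.eqb_refl. auto.
Qed.

Lemma forced_leave_effect n y r : sched n = SForcedLeave y r ->
  active (C n) r = true /\ r <> y /\ has_left (C (S n)) y = true /\
  In (EvLeave y) (changes (st (C (S n)) r)) /\ B n = Some (r, MLeave y).
Proof.
  intros H. pose proof (Hstep n) as Hs. unfold step_ok in Hs. rewrite H in Hs.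
  destruct Hs as [h1 [h2 [h3 h4]]]. unfold bc. rewrite cf_succ, bc_step, H. simpl.
  unfold upd. rewrite !Nat.eqb_refl. simpl. repeat split; auto. apply in_or_app; simpl; auto.
Qed.

Lemma entered_origin n y :
  entered (C n) y = true -> inS0 S0 y = true \/ exists j, (j < n)%nat /\ sched j = SEnter y.
Proof.
  induction n as [|n IH]; intros H; [left; exact H|].
  rewrite cf_succ in H.
  destruct (trans_flags_origin gamma (C n) (bc_prefix gamma S0 sched n) (sched n) y) as [A _].
  destruct (A H) as [h|h]; [|right; exists n; split; auto].
  destruct (IH h) as [h'|[j [hj hj']]]; auto. right. exists j. split; auto.
Qed.

Lemma entered_of_origin n q :
  (inS0 S0 q = true \/ exists e, (e < n)%nat /\ sched e = SEnter q) -> entered (C n) q = true.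
Proof.
  intros [h|[e [he hs]]].
  - apply (entered_mono gamma S0 sched 0 n q ltac:(lia)). exact h.
  - apply (entered_mono gamma S0 sched (S e) n q ltac:(lia)). apply (enter_effect e q hs).
Qed.

Lemma left_origin n y : has_left (C n) y = true ->
  exists j, (j < n)%nat /\ (sched j = SLeave y \/ exists r, sched j = SForcedLeave y r).
Proof.
  induction n as [|n IH]; intros H; [discriminate|].
  rewrite cf_succ in H.
  destruct (trans_flags_origin gamma (C n) (bc_prefix gamma S0 sched n) (sched n) y) as [_ A].
  destruct (A H) as [h|h]; [|exists n; split; auto].
  destruct (IH h) as [j [hj hj']]. exists j. split; auto.
Qed.

Lemma enter_unique j1 j2 y : sched j1 = SEnter y -> sched j2 = SEnter y -> j1 = j2.
Proof.
  intros H1 H2.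
  assert (K : forall a b, (a < b)%nat -> sched a = SEnter y -> sched b = SEnter y -> False).
  { intros a b h ha hb. destruct (enter_effect a y ha) as [_ [_ [h3 _]]].
    destruct (enter_effect b y hb) as [_ [h4 _]].
    rewrite (entered_mono gamma S0 sched (S a) b y ltac:(lia) h3) in h4. discriminate. }
  destruct (lt_eq_lt_dec j1 j2) as [[h|h]|h]; auto; exfalso; eauto.
Qed.

Lemma joins_effect q k : joins_at gamma S0 sched q k ->
  (exists i x Cs j, sched k = SRecv q i /\ B i = Some (x, MEnterEcho Cs j q)) /\
  B k = Some (q, MJoined q) /\ In (EvJoin q) (changes (st (C (S k)) q)) /\
  exists bb, join_bound (st (C (S k)) q) = Some bb /\ bb <= INR (echo_count (st (C (S k)) q)).
Proof.
  intros [H0 H1]. change (cfg gamma S0 sched (S k)) with (C (S k)) in H1.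
  change (cfg gamma S0 sched k) with (C k) in H0. rewrite cf_succ in H1 |- *.
  destruct (trans_join_spec gamma (C k) (bc_prefix gamma S0 sched k) (sched k) q H0 H1)
    as [[i [x [C' [j [h1 h2]]]]] [h3 h4]].
  split; [exists i, x, C', j; rewrite <- (bc_prefix_recv k q i h1); auto|].
  split; auto. unfold bc. rewrite bc_step. auto.
Qed.

Lemma joins_at_exists m r : inS0 S0 r = false -> is_joined (st (C m) r) = true ->
  exists jr, (jr < m)%nat /\ joins_at gamma S0 sched r jr.
Proof.
  intros h0. induction m as [|m IH]; intros h.
  - simpl in h. unfold init_state in h. rewrite h0 in h. discriminate.
  - destruct (is_joined (st (C m) r)) eqn:E.
    + destruct (IH eq_refl) as [jr [h1 h2]]. exists jr. split; auto.
    + exists m. split; auto. split; auto.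
Qed.

Lemma join_bound_origin n q bb : join_bound (st (C n) q) = Some bb ->
  exists u, (u < n)%nat /\ join_bound (st (C u) q) = None /\
    exists i x Cs, sched u = SRecv q i /\ B i = Some (x, MEnterEcho Cs true q) /\
      bb = gamma * INR (length (present_in (changes (st (C u) q) ++ Cs))).
Proof.
  induction n as [|n IH]; intros H.
  - simpl in H. unfold init_state in H. destruct (inS0 S0 q); discriminate.
  - destruct (join_bound (st (C n) q)) as [b0|] eqn:E.
    + pose proof (join_bound_mono gamma S0 sched n (S n) q b0 ltac:(lia) E).
      assert (b0 = bb) by congruence. subst b0.
      destruct (IH eq_refl) as [u [hu rest]]. exists u. split; auto.
    + exists n. split; auto. split; auto. rewrite cf_succ in H.
      destruct (trans_join_bound_spec gamma (C n) (bc_prefix gamma S0 sched n) (sched n) q bb E H)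
        as [i [x [C' [h1 [h2 h3]]]]].
      rewrite (bc_prefix_recv n q i h1) in h2. exists i, x, C'. auto.
Qed.

Definition own_echo_recv q j : bool := is_own_echo_recv (bc_prefix gamma S0 sched j) (sched j) q.

(* only meaningful at receive steps; [0] is a junk value *)
Definition echo_sender j : Node :=
  match sched j with
  | SRecv _ i => match B i with Some (x, _) => x | None => 0%nat end
  | _ => 0%nat
  end.

Definition echo_senders r n := map echo_sender (filter (own_echo_recv r) (seq 0 n)).

Lemma echo_count_bound n q :
  (echo_count (st (C n) q) <= length (filter (own_echo_recv q) (seq 0 n)))%nat.
Proof.
  induction n as [|n IH].
  - simpl. unfold init_state. destruct (inS0 S0 q); simpl; lia.
  - rewrite seq_S, filter_app, length_app. simpl. rewrite cf_succ.
    pose proof (trans_echo_count_le gamma (C n) (bc_prefix gamma S0 sched n) (sched n) q).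
    unfold own_echo_recv at 2. destruct (is_own_echo_recv _ _ _); simpl; lia.
Qed.

Lemma own_echo_recv_spec r j : own_echo_recv r j = true ->
  exists i x Cs bq er, sched j = SRecv r i /\ B i = Some (x, MEnterEcho Cs bq r) /\
    echo_sender j = x /\ sched i = SRecv x er /\ sched er = SEnter r /\ (er < i)%nat /\
    Cs = changes (st (C i) x) ++ [EvEnter r].
Proof.
  unfold own_echo_recv, is_own_echo_recv.
  destruct (sched j) as [| | | |q i|] eqn:E; try discriminate.
  destruct (Nat.eqb_spec q r); [subst q|discriminate]. simpl.
  rewrite (bc_prefix_recv j r i E).
  destruct (B i) as [[x [|Cs bq y| | | |]]|] eqn:Eb; try discriminate.
  intros h. apply Nat.eqb_eq in h. subst y.
  destruct (bc_spec i x _ Eb) as [er [x0 [hl [hs [hb [hC _]]]]]].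
  destruct (bc_spec er x0 _ hb) as [hs0 _].
  exists i, x, Cs, bq, er. unfold echo_sender. rewrite E, Eb. auto 10.
Qed.

Lemma echo_senders_NoDup r n : NoDup (echo_senders r n).
Proof.
  unfold echo_senders. apply NoDup_map_NoDup_ForallPairs; [|apply NoDup_filter, seq_NoDup].
  intros a b ha hb he. apply filter_In in ha as [_ ha]. apply filter_In in hb as [_ hb].
  destruct (own_echo_recv_spec r a ha) as [i [x [_ [_ [er [h1 [_ [h3 [h4 [h5 _]]]]]]]]]].
  destruct (own_echo_recv_spec r b hb) as [i' [x' [_ [_ [er' [h1' [_ [h3' [h4' [h5' _]]]]]]]]]].
  rewrite he, h3' in h3. subst x'.
  rewrite (enter_unique er er' r h5 h5') in h4. rewrite (recv_unique i i' x er' h4 h4') in h1.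
  exact (recv_unique a b r i' h1 h1').
Qed.

Lemma changes_origin n z e : In e (changes (st (C (S n)) z)) ->
  In e (changes (st (C n) z)) \/ (sched n = SEnter z /\ e = EvEnter z) \/
  (exists y, sched n = SForcedLeave y z /\ e = EvLeave y) \/
  (exists i x M, (i < n)%nat /\ sched n = SRecv z i /\ B i = Some (x, M) /\
     (In e (msg_events M) \/ e = EvJoin z)).
Proof.
  rewrite cf_succ. intros H. apply trans_changes_origin in H.
  destruct H as [h|[h|[h|[i [x [M [h1 [h2 h3]]]]]]]]; auto.
  right; right; right. rewrite (bc_prefix_recv n z i h1) in h2.
  exists i, x, M. split; [apply (recv_step_ok n z i h1)|auto].
Qed.

(* stated together with the in-flight messages so that the induction on steps goes through *)
Lemma leave_events_sound n :
  (forall z y, In (EvLeave y) (changes (st (C n) z)) -> has_left (C n) y = true) /\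
  (forall i sg M y, (i < n)%nat -> B i = Some (sg, M) -> In (EvLeave y) (msg_events M) ->
     has_left (C n) y = true).
Proof.
  induction n as [|n [IH1 IH2]].
  - split; [|intros; lia].
    intros z y H. simpl in H. unfold init_state in H.
    destruct (inS0 S0 z); simpl in H; [|contradiction].
    clear -H. induction S0 as [|a l IHl]; simpl in H; auto.
    destruct H as [h|[h|h]]; try discriminate; auto.
  - assert (IH2' : forall i sg M y, (i <= n)%nat -> B i = Some (sg, M) ->
                     In (EvLeave y) (msg_events M) -> has_left (C (S n)) y = true).
    { intros i sg M y hi hB hin. destruct (Nat.eq_dec i n) as [->|hne].
      - pose proof (bc_spec n sg M hB) as hc. destruct M; simpl in hin;
          try (destruct hin as [h|[]]; discriminate).
        + destruct hc as [i0 [x [_ [_ [_ [hC _]]]]]]. subst l.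
          rewrite in_app_iff in hin. destruct hin as [h|[h|[]]]; [|discriminate].
          apply (left_mono gamma S0 sched n); eauto.
        + destruct hin as [h|[]]. inversion h; subst. destruct hc as [[h1 _]|h1].
          * apply (leave_effect n y h1).
          * apply (forced_leave_effect n y sg h1).
        + destruct hin as [h|[]]. inversion h; subst. destruct hc as [i0 [x [hl [_ hb]]]].
          apply (left_mono gamma S0 sched n); auto. apply (IH2 i0 x (MLeave y) y); simpl; auto.
      - apply (left_mono gamma S0 sched n); auto. apply (IH2 i sg M y); auto. lia. }
    split; [|intros i sg M y hi; apply IH2'; lia].
    intros z y H. apply changes_origin in H.
    destruct H as [h|[[h1 h2]|[[y' [h1 h2]]|[i [x [M [hl [h1 [h2 [h3|h3]]]]]]]]]]; try discriminate.
    + apply (left_mono gamma S0 sched n); eauto.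
    + injection h2 as ->. apply (forced_leave_effect n _ z h1).
    + apply (IH2' i x M y); auto. lia.
Qed.

Lemma init_S0_entries y z : inS0 S0 z = true -> inS0 S0 y = true ->
  In (EvEnter y) (changes (init_state S0 z)).
Proof.
  intros hz hy. unfold init_state. rewrite hz. simpl.
  apply existsb_exists in hy as [y' [hy' he]]. apply Nat.eqb_eq in he. subst y'.
  apply in_flat_map. exists y. simpl; auto.
Qed.

(* likewise strengthened to the enter-echoes in flight *)
Lemma S0_entries_known n :
  (forall z, (is_joined (st (C n) z) = true \/ join_bound (st (C n) z) <> None) ->
     forall y, inS0 S0 y = true -> In (EvEnter y) (changes (st (C n) z))) /\
  (forall i sg Cs y' y, (i < n)%nat -> B i = Some (sg, MEnterEcho Cs true y') ->
     inS0 S0 y = true -> In (EvEnter y) Cs).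
Proof.
  induction n as [|n [IH1 IH2]].
  - split; [|intros; lia].
    intros z hz y hy. simpl. destruct (inS0 S0 z) eqn:E; [apply init_S0_entries; auto|].
    simpl in hz. unfold init_state in hz. rewrite E in hz. simpl in hz. destruct hz; congruence.
  - assert (IH2' : forall i sg Cs y' y, (i <= n)%nat -> B i = Some (sg, MEnterEcho Cs true y') ->
                     inS0 S0 y = true -> In (EvEnter y) Cs).
    { intros i sg Cs y' y hi hB hy. destruct (Nat.eq_dec i n) as [->|hne].
      - destruct (bc_spec n sg _ hB) as [i0 [x [_ [_ [_ [hC hj]]]]]].
        subst Cs. apply in_or_app. left. apply IH1; auto.
      - apply (IH2 i sg Cs y' y); auto. lia. }
    split; [|intros i sg Cs y' y hi; apply IH2'; lia].
    intros z hz y hy.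
    destruct (is_joined (st (C n) z)) eqn:Ej; [apply (changes_mono gamma S0 sched n); auto|].
    destruct (join_bound (st (C n) z)) as [b0|] eqn:Ejb.
    { apply (changes_mono gamma S0 sched n); auto. apply IH1; auto. right; congruence. }
    assert (exists bb, join_bound (st (C (S n)) z) = Some bb) as [bb Hbb].
    { destruct hz as [hz|hz].
      - rewrite cf_succ in hz |- *.
        destruct (trans_join_spec gamma (C n) _ (sched n) z Ej hz) as [_ [_ [_ [bb [h _]]]]]. eauto.
      - destruct (join_bound (st (C (S n)) z)); eauto. congruence. }
    rewrite cf_succ in Hbb.
    destruct (trans_join_bound_spec gamma (C n) _ (sched n) z bb Ejb Hbb)
      as [i [x [Cs [h1 [h2 _]]]]].
    rewrite (bc_prefix_recv n z i h1) in h2.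
    destruct (recv_effect n z i x _ h1 h2) as [hinc _]. apply hinc. simpl.
    apply (IH2 i x Cs z y); auto. apply (recv_step_ok n z i h1).
Qed.

Lemma active_before n m q :
  (n <= m)%nat -> active (C m) q = true -> entered (C n) q = true -> active (C n) q = true.
Proof.
  intros hnm ha he. apply active_split in ha as [_ [hl hc]]. apply active_split.
  split; auto. split.
  - destruct (has_left (C n) q) eqn:E; auto.
    rewrite (left_mono gamma S0 sched n m q hnm E) in hl. discriminate.
  - destruct (crashed (C n) q) eqn:E; auto.
    rewrite (crashed_mono gamma S0 sched n m q hnm E) in hc. discriminate.
Qed.

Lemma delivered_in_time i sg M q m :
  B i = Some (sg, M) -> q <> sg -> active (C m) q = true -> T i + D < T m ->
  (inS0 S0 q = true \/ exists e, sched e = SEnter q /\ T e <= T i) ->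
  exists j, sched j = SRecv q i /\ T j <= T i + D /\ (i < j)%nat /\ (j < m)%nat.
Proof.
  intros hB hq ha hT hent.
  destruct (Hdel i sg M hB q hq) as [j [hj1 hj2]].
  - intros t' [ht1 ht2]. destruct (cut_exists t') as [n' hn']. apply (active_at_cut t' q n' hn').
    assert (hn'm : (n' <= m)%nat).
    { destruct (le_lt_dec n' m) as [l|l]; auto. apply (cut_spec t' n' hn') in l. lra. }
    apply (active_before n' m q hn'm ha), entered_of_origin.
    destruct hent as [h|[e [he1 he2]]]; auto. right. exists e. split; auto.
    apply (cut_spec t' n' hn'). lra.
  - exists j. split; auto. split; auto. split; [apply (recv_step_ok j q i hj1)|].
    apply T_lt_index. lra.
Qed.

Definition announces k ev sg M : Prop :=
  B k = Some (sg, M) /\ In ev (msg_events M) /\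
  (In ev (changes (st (C (S k)) sg)) \/ has_left (C (S k)) sg = true) /\
  (forall j q, sched j = SRecv q k -> exists M', B j = Some (q, M') /\ In ev (msg_events M')).

Lemma event_announced k ev : event_at gamma S0 sched k ev -> exists sg M, announces k ev sg M.
Proof.
  destruct ev as [q|q|q]; simpl; intros H.
  - destruct (enter_effect k q H) as [_ [_ [_ [h4 h5]]]]. exists q, (MEnter q).
    repeat split; simpl; auto. intros j q' hj. destruct (recv_effect j q' k q _ hj h5) as [_ h].
    eexists; split; [exact h|]. simpl. apply in_or_app; simpl; auto.
  - destruct (joins_effect q k H) as [_ [h2 [h3 _]]]. exists q, (MJoined q).
    repeat split; simpl; auto. intros j q' hj. destruct (recv_effect j q' k q _ hj h2) as [_ h].
    eexists; split; [exact h|]. simpl; auto.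
  - destruct H as [H|[r H]].
    + destruct (leave_effect k q H) as [_ [h2 h3]]. exists q, (MLeave q).
      repeat split; simpl; auto. intros j q' hj. destruct (recv_effect j q' k q _ hj h3) as [_ h].
      eexists; split; [exact h|]. simpl; auto.
    + destruct (forced_leave_effect k q r H) as [_ [_ [_ [h4 h5]]]]. exists r, (MLeave q).
      repeat split; simpl; auto. intros j q' hj. destruct (recv_effect j q' k r _ hj h5) as [_ h].
      eexists; split; [exact h|]. simpl; auto.
Qed.

Definition knows_before m r :=
  forall k ev, event_at gamma S0 sched k ev -> T k + 2 * D < T m -> In ev (changes (st (C m) r)).

Definition informed m :=
  forall r, active (C m) r = true -> (inS0 S0 r = true \/ is_joined (st (C m) r) = true) ->
  knows_before m r.

Definition entries_at j : list Node := match sched j with SEnter y => [y] | _ => [] end.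
Definition entries n1 n2 := flat_map entries_at (seq n1 (n2 - n1)).
Definition candidates n := S0 ++ entries 0 n.
Definition present_list n := nodup Nat.eq_dec (filter (fun y => present (C n) y) (candidates n)).
Definition leavers n1 n2 := filter (fun y => has_left (C n2) y) (present_list n1).
Definition crashed_list n := filter (fun y => crashed (C n) y) (present_list n).

Lemma In_entries y n1 n2 :
  In y (entries n1 n2) <-> exists j, (n1 <= j < n2)%nat /\ sched j = SEnter y.
Proof.
  unfold entries. rewrite in_flat_map. split.
  - intros [j [hj hy]]. apply in_seq in hj. exists j. split; [lia|].
    unfold entries_at in hy. destruct (sched j); simpl in hy; try contradiction.
    destruct hy as [->|[]]; auto.
  - intros [j [hj hs]]. exists j. split; [apply in_seq; lia|].
    unfold entries_at. rewrite hs. simpl; auto.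
Qed.

Lemma NoDup_entries n1 n2 : NoDup (entries n1 n2).
Proof.
  unfold entries. generalize (n2 - n1)%nat as k. induction k as [|k IH]; [constructor|].
  rewrite seq_S, flat_map_app. apply NoDup_app; auto.
  - simpl. rewrite app_nil_r. unfold entries_at.
    destruct (sched (n1 + k)); repeat constructor; simpl; auto.
  - intros y hy hy2. simpl in hy2. rewrite app_nil_r in hy2. unfold entries_at in hy2.
    destruct (sched (n1 + k)) eqn:E; simpl in hy2; try contradiction. destruct hy2 as [<-|[]].
    apply in_flat_map in hy as [j [hj hy]]. apply in_seq in hj.
    unfold entries_at in hy. destruct (sched j) eqn:E2; simpl in hy; try contradiction.
    destruct hy as [<-|[]]. pose proof (enter_unique j (n1 + k) _ E2 E). lia.
Qed.

Lemma entry_in_window x v nb c3 :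
  entered (C v) x = true -> entered (C nb) x = false -> (v <= c3)%nat -> In x (entries nb c3).
Proof.
  intros hv hnb hvc. destruct (entered_origin v x hv) as [h|[e [he hs]]].
  - rewrite (entered_of_origin nb x (or_introl h)) in hnb. discriminate.
  - apply In_entries. exists e. split; [|exact hs]. split; [|lia].
    destruct (le_lt_dec nb e) as [l|l]; auto.
    rewrite (entered_of_origin nb x (or_intror (ex_intro _ e (conj l hs)))) in hnb. discriminate.
Qed.

Lemma entries_split n1 n2 n3 : (n1 <= n2 <= n3)%nat ->
  length (entries n1 n3) = (length (entries n1 n2) + length (entries n2 n3))%nat.
Proof.
  intros h. unfold entries. replace (n3 - n1)%nat with ((n2 - n1) + (n3 - n2))%nat by lia.
  rewrite seq_app, flat_map_app, length_app. replace (n1 + (n2 - n1))%nat with n2 by lia. auto.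
Qed.

Lemma entries_length_mono n1 n2 n3 : (n1 <= n2 <= n3)%nat ->
  (length (entries n1 n2) <= length (entries n1 n3))%nat.
Proof. intros h. rewrite (entries_split n1 n2 n3 h). lia. Qed.

Lemma In_present_list n y : In y (present_list n) <-> present (C n) y = true.
Proof.
  unfold present_list. rewrite nodup_In, filter_In. split; [tauto|]. intros h. split; auto.
  apply present_split in h as [he _]. apply in_or_app.
  destruct (entered_origin n y he) as [h|[j [hj hs]]].
  - left. apply existsb_exists in h as [y' [h1 h2]]. apply Nat.eqb_eq in h2. subst; auto.
  - right. apply In_entries. exists j. split; [lia|auto].
Qed.

Lemma NoDup_present_list n : NoDup (present_list n).
Proof. apply NoDup_nodup. Qed.

Lemma card_present_list n :
  card_pred (fun q => present (cfg gamma S0 sched n) q = true) (length (present_list n)).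
Proof.
  exists (present_list n). split; [apply NoDup_present_list|]. split; auto. apply In_present_list.
Qed.

Lemma present_list_change n1 n2 : (n1 <= n2)%nat ->
  (length (present_list n2) + length (leavers n1 n2)
     <= length (present_list n1) + length (entries n1 n2))%nat.
Proof.
  intros h.
  assert (H : (length (present_list n2)
                 <= length (filter (fun y => negb (has_left (C n2) y)) (present_list n1))
                    + length (entries n1 n2))%nat).
  { apply NoDup_length_le_app; [apply NoDup_present_list|].
    intros y hy. apply In_present_list, present_split in hy as [he hl].
    destruct (entered (C n1) y) eqn:E1.
    - left. apply filter_In. rewrite hl. split; auto. apply In_present_list, present_split.
      split; auto. destruct (has_left (C n1) y) eqn:E2; auto.
      rewrite (left_mono gamma S0 sched n1 n2 y h E2) in hl. discriminate.
    - right. exact (entry_in_window y n2 n1 n2 he E1 (le_n n2)). }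
  assert (length (leavers n1 n2)
            + length (filter (fun y => negb (has_left (C n2) y)) (present_list n1))
          = length (present_list n1))%nat by apply filter_length.
  lia.
Qed.

Lemma leavers_churn n1 n2 y : In y (leavers n1 n2) ->
  exists j, (n1 <= j < n2)%nat /\ (sched j = SLeave y \/ exists r, sched j = SForcedLeave y r).
Proof.
  intros hy. apply filter_In in hy as [hp hl].
  apply In_present_list, present_split in hp as [_ hl1].
  destruct (left_origin n2 y hl) as [j [hj hs]]. exists j. split; auto. split; auto.
  destruct (le_lt_dec n1 j) as [l|l]; auto. exfalso.
  assert (has_left (C (S j)) y = true).
  { destruct hs as [hs|[r hs]];
      [apply (leave_effect j y hs)|apply (forced_leave_effect j y r hs)]. }
  rewrite (left_mono gamma S0 sched (S j) n1 y ltac:(lia) H) in hl1. discriminate.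
Qed.

Lemma leavers_split n0 n1 n2 : (n0 <= n1 <= n2)%nat ->
  (length (leavers n0 n2) <= length (leavers n0 n1) + length (leavers n1 n2))%nat.
Proof.
  intros hn. apply NoDup_length_le_app; [apply NoDup_filter, NoDup_present_list|].
  intros y hy. apply filter_In in hy as [hp hl2].
  destruct (has_left (C n1) y) eqn:hl1; [left; apply filter_In; auto|right].
  apply filter_In. split; auto. apply In_present_list, present_split. split; auto.
  apply In_present_list, present_split in hp. apply (entered_mono gamma S0 sched n0); [lia|tauto].
Qed.

Lemma window_churn_bound t nc n1 n2 :
  0 <= t -> cut T t nc -> (forall j, (n1 <= j)%nat -> t <= T j) -> (n1 <= n2)%nat ->
  cut T (t + D) n2 ->
  INR (length (entries n1 n2) + length (leavers n1 n2)) <= alpha * INR (length (present_list nc)).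
Proof.
  intros ht hc hlow hn hc2. rewrite <- length_app.
  apply (Hchurn t (length (present_list nc)) ht).
  - exists nc. split; auto. apply card_present_list.
  - apply NoDup_app; [apply NoDup_entries|apply NoDup_filter, NoDup_present_list|].
    intros y hy hy2. apply In_entries in hy as [j [hj hs]].
    apply filter_In in hy2 as [hp _]. apply In_present_list, present_split in hp as [he _].
    destruct (enter_effect j y hs) as [_ [h2 _]].
    rewrite (entered_mono gamma S0 sched n1 j y ltac:(lia) he) in h2. discriminate.
  - intros y hy. assert (hwin : forall j, (n1 <= j < n2)%nat -> t <= T j <= t + D).
    { intros j hj. split; [apply hlow; lia|apply (cut_spec _ _ hc2); lia]. }
    apply in_app_iff in hy as [hy|hy].
    + apply In_entries in hy as [j [hj hs]]. exists j. split; auto.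
    + destruct (leavers_churn n1 n2 y hy) as [j [hj hs]]. exists j. split; auto.
Qed.

Lemma crash_bound t nc : 0 <= t -> cut T t nc ->
  INR (length (crashed_list nc)) <= Delta * INR (length (present_list nc)).
Proof.
  intros ht hc. apply (Hfail t nc (length (present_list nc)) ht hc (card_present_list nc)).
  - apply NoDup_filter, NoDup_present_list.
  - intros x hx. apply filter_In in hx as [h1 h2]. apply In_present_list in h1. auto.
Qed.

Lemma Nmin_bound b nb : 0 <= b -> (forall j, (j < nb)%nat <-> T j < b) ->
  (Nmin <= length (present_list nb))%nat.
Proof.
  intros hb hn.
  assert (exists t, 0 <= t /\ cut T t nb) as [t [h0 hc]].
  { destruct nb as [|nb].
    - exists 0. split; [lra|]. split; [intros; lia|apply T_pos].
    - exists (T nb). split; [left; apply T_pos|]. split; [intros k hk; apply T_mono; lia|].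
      destruct (Rlt_le_dec (T nb) (T (S nb))) as [h|h]; auto.
      assert (T nb < b) by (apply hn; lia).
      assert (hS : (S nb < S nb)%nat) by (apply hn; pose proof (T_mono nb (S nb) ltac:(lia)); lra).
      lia. }
  apply (HNmin t (length (present_list nb)) h0). exists nb. split; auto. apply card_present_list.
Qed.

Lemma lagging_node_inactive k ev sg M v x :
  announces k ev sg M -> (k < v)%nat -> (forall j q, sched j = SRecv q k -> (j < v)%nat) ->
  active (C v) x = true -> ~ In ev (changes (st (C v) x)) ->
  exists t, T k <= t <= T k + D /\ ~ active_at gamma S0 sched T x t.
Proof.
  intros [HB [Hin [Hsg Hrc]]] hkv Hbefore Hact Hlack. apply NNPP. intros Hall.
  destruct (Nat.eq_dec x sg) as [->|hne].
  - destruct Hsg as [h|h].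
    + apply Hlack, (changes_mono gamma S0 sched (S k)); [lia|exact h].
    + apply active_split in Hact as [_ [hl _]].
      rewrite (left_mono gamma S0 sched (S k) v sg ltac:(lia) h) in hl. discriminate.
  - destruct (Hdel k sg M HB x hne) as [j [hj _]].
    { intros t ht. apply NNPP. intros hn. apply Hall. eauto. }
    apply Hlack, (recv_knows j x k sg M ev hj HB Hin v). apply Hbefore in hj. lia.
Qed.

Lemma inactive_node_churns k v x t nb c3 cs :
  (inS0 S0 x = true \/ exists e, sched e = SEnter x /\ T e <= T k) ->
  T k <= t <= T k + D -> ~ active_at gamma S0 sched T x t ->
  active (C v) x = true -> (nb <= v)%nat -> (v <= c3)%nat ->
  cut T (T k + D) cs -> (cs <= c3)%nat ->
  In x (entries nb c3) \/ In x (leavers nb c3) \/ In x (crashed_list cs).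
Proof.
  intros hold ht hna hact hnbv hvc hcs hcs3.
  destruct (cut_exists t) as [n hn]. rewrite (active_at_cut t x n hn) in hna.
  pose proof hact as [hent [hleft hcrash]]%active_split.
  assert (hentn : entered (C n) x = true).
  { apply entered_of_origin. destruct hold as [h|[e [he hTe]]]; auto.
    right. exists e. split; auto. apply (cut_spec t n hn). lra. }
  assert (hvn : (v < n)%nat).
  { destruct (le_lt_dec n v) as [h|h]; auto.
    exfalso. apply hna, (active_before n v x h hact hentn). }
  assert (hncs : (n <= cs)%nat) by (apply (cut_mono t (T k + D)); auto; lra).
  destruct (has_left (C cs) x) eqn:hlcs.
  - destruct (entered (C nb) x) eqn:henb.
    + right; left. apply filter_In. split; [|exact (left_mono gamma S0 sched cs c3 x hcs3 hlcs)].
      apply In_present_list, present_split. split; auto.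
      destruct (has_left (C nb) x) eqn:E; auto.
      rewrite (left_mono gamma S0 sched nb v x hnbv E) in hleft. discriminate.
    + left. exact (entry_in_window x v nb c3 hent henb hvc).
  - right; right. apply filter_In. split.
    + apply In_present_list, present_split. split; auto.
      apply (entered_mono gamma S0 sched n); auto.
    + assert (has_left (C n) x = true \/ crashed (C n) x = true) as [h|h].
      { destruct (has_left (C n) x) eqn:E1; auto. destruct (crashed (C n) x) eqn:E2; auto.
        exfalso. apply hna, active_split. auto. }
      * rewrite (left_mono gamma S0 sched n cs x hncs h) in hlcs. discriminate.
      * exact (crashed_mono gamma S0 sched n cs x hncs h).
Qed.

Lemma lagging_node_churns k ev sg M v x nb c3 cs b :
  announces k ev sg M -> (forall j q, sched j = SRecv q k -> (j < v)%nat) ->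
  b <= T k -> T k < T v -> (forall j, (j < nb)%nat <-> T j < b) -> (v <= c3)%nat ->
  cut T (T k + D) cs -> (cs <= c3)%nat ->
  active (C v) x = true -> ~ In ev (changes (st (C v) x)) ->
  In x (entries nb c3) \/ In x (leavers nb c3) \/ In x (crashed_list cs).
Proof.
  intros Hann Hbefore hbk hkv Hnb hvc hcs hcs3 hact hlack.
  assert (hnbv : (nb <= v)%nat).
  { destruct (le_lt_dec nb v) as [h|h]; auto. apply Hnb in h. lra. }
  destruct (classic (inS0 S0 x = true \/ exists e, sched e = SEnter x /\ T e <= T k))
    as [hold|hnew].
  - destruct (lagging_node_inactive k ev sg M v x Hann (T_lt_index k v hkv) Hbefore hact hlack)
      as [t [ht hna]].
    exact (inactive_node_churns k v x t nb c3 cs hold ht hna hact hnbv hvc hcs hcs3).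
  - left. apply (entry_in_window x v); [apply active_split in hact; tauto| |exact hvc].
    destruct (entered (C nb) x) eqn:E; auto. exfalso. apply hnew.
    destruct (entered_origin nb x E) as [h|[e [he hs]]]; auto.
    right. exists e. split; auto. apply Hnb in he. lra.
Qed.

Lemma echo_senders_churn m r k ev sg M er nb c3 cs b n :
  announces k ev sg M -> sched er = SEnter r -> T k < T er ->
  (forall j q, sched j = SRecv q k -> (j < er)%nat) ->
  b <= T k -> (forall j, (j < nb)%nat <-> T j < b) -> T er + D <= b + 3 * D ->
  cut T (b + 3 * D) c3 -> cut T (T k + D) cs -> (cs <= c3)%nat ->
  (n <= m)%nat -> ~ In ev (changes (st (C m) r)) ->
  forall x, In x (echo_senders r n) ->
  In x (entries nb c3) \/ In x (leavers nb c3) \/ In x (crashed_list cs).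
Proof.
  intros Hann her hker Hbefore hbk Hnb hT3 Hc3 Hcs hcs3 hnm Hnot x hx.
  apply in_map_iff in hx as [j [hjx hj]]. apply filter_In in hj as [hjseq hjecho].
  apply in_seq in hjseq.
  destruct (own_echo_recv_spec r j hjecho)
    as [v [x' [Cs [bq [er' [hj_s [hv [hsender [hv_s [her' [_ hCs]]]]]]]]]]].
  rewrite hjx in hsender. subst x'. rewrite (enter_unique er' er r her' her) in hv_s.
  destruct (recv_step_ok v x er hv_s) as [herv [_ [hvact [hTv _]]]].
  apply (lagging_node_churns k ev sg M v x nb c3 cs b Hann); auto.
  - intros j' q hj'. apply Hbefore in hj'. lia.
  - pose proof (T_mono er v ltac:(lia)). lra.
  - assert (hvc3 : (v < c3)%nat) by (apply (cut_spec _ _ Hc3); lra). lia.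
  - intros hxv. apply Hnot, (recv_knows j r v x _ ev hj_s hv); [|lia].
    simpl. rewrite hCs. apply in_or_app. auto.
Qed.

Lemma known_present_bound w i nb c3 L :
  knows_before i w -> is_joined (st (C i) w) = true ->
  (forall j, (j < nb)%nat -> T j + 2 * D < T i) -> (nb <= c3)%nat ->
  incl (changes (st (C i) w)) L ->
  (forall y, In (EvLeave y) L -> has_left (C c3) y = true) ->
  (length (present_list nb) <= length (present_in L) + length (leavers nb c3))%nat.
Proof.
  intros Hknows Hjoined Hold hc3 Hincl Hleave.
  apply NoDup_length_le_app; [apply NoDup_present_list|]. intros y hy.
  assert (hE : In (EvEnter y) L).
  { apply Hincl. apply In_present_list, present_split in hy as [hye _].
    destruct (entered_origin nb y hye) as [hs|[j [hj hs]]].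
    - apply (proj1 (S0_entries_known i)); auto.
    - apply (Hknows j); [exact hs|auto]. }
  destruct (classic (In (EvLeave y) L)) as [hl|hl].
  - right. apply filter_In. auto.
  - left. apply present_in_iff. auto.
Qed.

Lemma echo_present_bound r u i w nb c3 :
  sched u = SRecv r i ->
  B i = Some (w, MEnterEcho (changes (st (C i) w) ++ [EvEnter r]) true r) ->
  knows_before i w -> is_joined (st (C i) w) = true ->
  (forall j, (j < nb)%nat -> T j + 2 * D < T i) -> (nb <= c3)%nat -> (S u <= c3)%nat ->
  (length (present_list nb)
     <= length (present_in (changes (st (C u) r) ++ changes (st (C i) w) ++ [EvEnter r]))
        + length (leavers nb c3))%nat.
Proof.
  intros hu_s hi hw hwj Hold hnb huc3.
  apply (known_present_bound w i nb c3); auto.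
  - intros e he. apply in_or_app. right. apply in_or_app. auto.
  - intros y hy. apply (left_mono gamma S0 sched (S u) c3 y huc3).
    apply (proj1 (leave_events_sound (S u)) r y).
    apply in_app_iff in hy as [hy|hy]; [apply (changes_mono gamma S0 sched u); auto|].
    destruct (recv_effect u r i w _ hu_s hi) as [hinc _]. apply hinc. exact hy.
Qed.

Lemma join_witness m r er :
  inS0 S0 r = false -> is_joined (st (C m) r) = true -> sched er = SEnter r ->
  exists jr u i w, (jr < m)%nat /\ (u <= jr)%nat /\
    sched u = SRecv r i /\ sched i = SRecv w er /\
    B i = Some (w, MEnterEcho (changes (st (C i) w) ++ [EvEnter r]) true r) /\
    is_joined (st (C i) w) = true /\
    gamma * INR (length (present_in (changes (st (C u) r) ++ changes (st (C i) w) ++ [EvEnter r])))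
      <= INR (length (echo_senders r (S jr))).
Proof.
  intros hS0 hjoined her.
  destruct (joins_at_exists m r hS0 hjoined) as [jr [hjr hjoin]].
  destruct (joins_effect r jr hjoin) as [_ [_ [_ [bb [hbb hcount]]]]].
  destruct (join_bound_origin (S jr) r bb hbb) as [u [hu [_ [i [w [Cw [hu_s [hi hbbdef]]]]]]]].
  destruct (bc_spec i w _ hi) as [i0 [x0 [_ [hi_s [hi0 [hCw hjw]]]]]].
  destruct (bc_spec i0 x0 _ hi0) as [hi0_s _].
  rewrite (enter_unique i0 er r hi0_s her) in hi_s. subst Cw.
  exists jr, u, i, w. repeat split; try congruence; try lia.
  rewrite <- hbbdef. eapply Rle_trans; [exact hcount|].
  apply le_INR. unfold echo_senders. rewrite length_map. apply echo_count_bound.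
Qed.

Lemma early_node_learns m r k ev sg M :
  announces k ev sg M -> active (C m) r = true -> T k + 2 * D < T m ->
  (inS0 S0 r = true \/ exists e, sched e = SEnter r /\ T e <= T k) ->
  In ev (changes (st (C m) r)).
Proof.
  intros [HB [Hin [Hsg _]]] hact hTm hent.
  assert (hkm : (k < m)%nat) by (apply T_lt_index; lra).
  destruct (Nat.eq_dec r sg) as [->|hne].
  - destruct Hsg as [h|h]; [apply (changes_mono gamma S0 sched (S k)); auto|].
    apply active_split in hact as [_ [hl _]].
    rewrite (left_mono gamma S0 sched (S k) m sg hkm h) in hl. discriminate.
  - destruct (delivered_in_time k sg M r m HB hne hact ltac:(lra) hent) as [j [hj [_ [_ hjm]]]].
    exact (recv_knows j r k sg M ev hj HB Hin m hjm).
Qed.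

Lemma relayed_event_learned m r k ev sg M er j q :
  announces k ev sg M -> active (C m) r = true -> T k + 2 * D < T m ->
  sched er = SEnter r -> sched j = SRecv q k -> (er < j)%nat ->
  In ev (changes (st (C m) r)).
Proof.
  intros [HB [Hin [_ Hrc]]] hact hTm her hj herj.
  destruct (recv_step_ok j q k hj) as [_ [_ [_ [hTj _]]]].
  assert (hjm : (j < m)%nat) by (apply T_lt_index; lra).
  destruct (Nat.eq_dec r q) as [->|hne]; [exact (recv_knows j q k sg M ev hj HB Hin m hjm)|].
  destruct (Hrc j q hj) as [M' [hB' hin']].
  destruct (delivered_in_time j q M' r m hB' hne hact ltac:(lra)) as [j' [hj' [_ [_ hj'm]]]].
  { right. exists er. split; auto. apply T_mono. lia. }
  exact (recv_knows j' r j q M' ev hj' hB' hin' m hj'm).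
Qed.

Hypothesis Ha0 : 0 <= alpha.
Hypothesis Ha1 : alpha <= 1 - Rpower 2 (- (1 / 4)).
Hypothesis Hd0 : 0 <= Delta.
Hypothesis HNp : 1 < ((1 - alpha) ^ 3 - Delta * (1 + alpha) ^ 3) * INR Nmin.
Hypothesis Hg : gamma >= 1 / (INR Nmin * (1 - alpha) ^ 3)
                         + (1 + Delta) * (1 + alpha) ^ 3 / (1 - alpha) ^ 3 - 1.

Lemma window_count_contradiction b nb c3 cs tcs P S :
  0 <= b -> (forall j, (j < nb)%nat <-> T j < b) -> cut T (b + 3 * D) c3 ->
  b + D <= tcs <= b + 3 * D -> cut T tcs cs ->
  (length (present_list nb) <= P + length (leavers nb c3))%nat ->
  gamma * INR P <= INR S ->
  (S <= length (entries nb c3) + length (leavers nb c3) + length (crashed_list cs))%nat ->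
  False.
Proof.
  intros hb Hnb Hc3 htcs Hcs HP HS Hsenders.
  destruct (cut_exists b) as [c0 Hc0].
  destruct (cut_exists (b + D)) as [c1 Hc1].
  destruct (cut_exists (b + D + D)) as [c2 Hc2].
  replace (b + 3 * D) with (b + D + D + D) in Hc3 by ring.
  assert (hnb0 : (nb <= c0)%nat).
  { destruct (le_lt_dec nb c0) as [h|h]; auto. apply Hnb in h. destruct Hc0. lra. }
  assert (h01 : (c0 <= c1)%nat) by (apply (cut_mono b (b + D)); auto; lra).
  assert (h12 : (c1 <= c2)%nat) by (apply (cut_mono (b + D) (b + D + D)); auto; lra).
  assert (h23 : (c2 <= c3)%nat) by (apply (cut_mono (b + D + D) (b + D + D + D)); auto; lra).
  assert (h1s : (c1 <= cs)%nat) by (apply (cut_mono (b + D) tcs); auto; lra).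
  assert (hs3 : (cs <= c3)%nat) by (apply (cut_mono tcs (b + D + D + D)); auto; lra).
  assert (hafter : forall j, (nb <= j)%nat -> b <= T j).
  { intros j hj. destruct (Rle_lt_dec b (T j)) as [h|h]; [exact h|]. apply Hnb in h. lia. }
  assert (F1 := window_churn_bound b c0 nb c1 hb Hc0 hafter ltac:(lia) Hc1).
  assert (F2 := window_churn_bound (b + D) c1 c1 c2 ltac:(lra) Hc1
                  (fun j hj => Rlt_le _ _ (cut_after _ _ Hc1 j hj)) h12 Hc2).
  assert (F3 := window_churn_bound (b + D + D) c2 c2 c3 ltac:(lra) Hc2
                  (fun j hj => Rlt_le _ _ (cut_after _ _ Hc2 j hj)) h23 Hc3).
  assert (F4 := crash_bound tcs cs ltac:(lra) Hcs).
  pose proof (present_list_change nb c0 hnb0).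
  pose proof (present_list_change nb c1 ltac:(lia)).
  pose proof (present_list_change c1 c2 h12).
  pose proof (present_list_change c1 cs h1s).
  pose proof (entries_length_mono nb c0 c1 ltac:(lia)).
  pose proof (entries_length_mono c1 cs c3 ltac:(lia)).
  pose proof (entries_split c1 c2 c3 ltac:(lia)).
  pose proof (entries_split nb c1 c3 ltac:(lia)).
  pose proof (leavers_split nb c1 c3 ltac:(lia)).
  pose proof (leavers_split c1 c2 c3 ltac:(lia)).
  pose proof (Nmin_bound b nb hb Hnb).
  destruct (parameter_facts alpha Delta gamma Nmin Ha0 Ha1 Hd0 HNp Hg) as [pa1 [pa2 [pa3 [pa4 pa5]]]].
  rewrite !plus_INR in F1, F2, F3.
  apply (join_count_contradiction alpha Delta gamma (INR Nmin) (INR (length (present_list nb)))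
    (INR (length (leavers nb c3)))
    (INR (length (entries nb c1))) (INR (length (entries c1 c2))) (INR (length (entries c2 c3)))
    (INR (length (leavers nb c1))) (INR (length (leavers c1 c2))) (INR (length (leavers c2 c3)))
    (INR (length (present_list c0))) (INR (length (present_list c1)))
    (INR (length (present_list c2))) (INR (length (present_list cs)))
    (INR (length (crashed_list cs))) (INR P) (INR S));
    auto; try apply pos_INR; try (apply le_INR; auto);
    try (rewrite <- !plus_INR; apply le_INR; lia).
Qed.

Lemma late_joiner_learns m r k ev sg M er :
  (forall m', (m' < m)%nat -> informed m') ->
  inS0 S0 r = false -> active (C m) r = true -> is_joined (st (C m) r) = true ->
  announces k ev sg M -> event_at gamma S0 sched k ev ->
  sched er = SEnter r -> T k < T er -> (forall j q, sched j = SRecv q k -> (j < er)%nat) ->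
  T k + 2 * D < T m -> In ev (changes (st (C m) r)).
Proof.
  intros IH hS0 hact hjoined Hann hev her hker Hbefore hkm. apply NNPP. intros Hnot.
  destruct (join_witness m r er hS0 hjoined her)
    as [jr [u [i [w [hjr [hu [hu_s [hi_s [hi [hwj Hbound]]]]]]]]]].
  destruct (recv_step_ok i w er hi_s) as [heri [_ [hwact [hTi _]]]].
  destruct (recv_step_ok u r i hu_s) as [hiu [_ [_ [hTu _]]]].
  assert (hlearn : forall e,
            In e (changes (st (C i) w) ++ [EvEnter r]) -> In e (changes (st (C m) r))).
  { intros e he. apply (recv_knows u r i w _ e hu_s hi he). lia. }
  assert (hw : knows_before i w) by (apply (IH i ltac:(lia) w hwact); auto).
  (* w would otherwise have passed ev on to r *)
  assert (hTik : T i <= T k + 2 * D).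
  { destruct (Rle_lt_dec (T i) (T k + 2 * D)) as [h|h]; auto.
    exfalso. apply Hnot, hlearn, in_or_app. left. exact (hw k ev hev h). }
  set (b := Rmax (T i - 2 * D) 0).
  assert (hb0 : 0 <= b) by apply Rmax_r.
  assert (hbi : T i - 2 * D <= b) by apply Rmax_l.
  assert (hbk : b <= T k).
  { pose proof (T_pos k). unfold b, Rmax. destruct (Rle_dec (T i - 2 * D) 0); lra. }
  destruct (cut_strict_exists b) as [nb Hnb].
  destruct (cut_exists (b + 3 * D)) as [c3 Hc3].
  destruct (cut_exists (T k + D)) as [cs Hcs].
  assert (hT3 : T er + D <= b + 3 * D) by (pose proof (T_mono er i ltac:(lia)); lra).
  assert (hcs3 : (cs <= c3)%nat) by (apply (cut_mono (T k + D) (b + 3 * D)); auto; lra).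
  assert (huc3 : (S u <= c3)%nat) by (apply (cut_spec _ _ Hc3); lra).
  assert (hnbc3 : (nb <= c3)%nat).
  { destruct (le_lt_dec nb c3) as [h|h]; auto. apply Hnb in h. destruct Hc3. lra. }
  apply (window_count_contradiction b nb c3 cs (T k + D)
    (length (present_in (changes (st (C u) r) ++ changes (st (C i) w) ++ [EvEnter r])))
    (length (echo_senders r (S jr))) hb0 Hnb Hc3 ltac:(lra) Hcs); [|exact Hbound|].
  - apply (echo_present_bound r u i w nb c3 hu_s hi hw hwj); [|lia|exact huc3].
    intros j hj. apply Hnb in hj. pose proof (T_pos j).
    unfold b, Rmax in hj. destruct (Rle_dec (T i - 2 * D) 0); lra.
  - apply NoDup_length_le_app3; [apply echo_senders_NoDup|].
    exact (echo_senders_churn m r k ev sg M er nb c3 cs b (S jr)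
             Hann her hker Hbefore hbk Hnb hT3 Hc3 Hcs hcs3 hjr Hnot).
Qed.

Lemma informed_all m : informed m.
Proof.
  induction m as [m IH] using lt_wf_ind.
  intros r hact hjoined k ev hev hkm.
  destruct (event_announced k ev hev) as [sg [M Hann]].
  destruct (classic (inS0 S0 r = true \/ exists e, sched e = SEnter r /\ T e <= T k))
    as [hearly|hlate].
  { exact (early_node_learns m r k ev sg M Hann hact hkm hearly). }
  assert (hS0 : inS0 S0 r = false) by (destruct (inS0 S0 r); tauto).
  destruct hjoined as [h|hjoined]; [congruence|].
  destruct (entered_origin m r (proj1 (proj1 (active_split _ r) hact))) as [h|[er [_ her]]];
    [congruence|].
  assert (hker : T k < T er).
  { destruct (Rle_lt_dec (T er) (T k)) as [h|h]; auto. exfalso. eauto. }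
  destruct (classic (exists j q, sched j = SRecv q k /\ (er < j)%nat)) as [[j [q [hj herj]]]|hnone].
  { exact (relayed_event_learned m r k ev sg M er j q Hann hact hkm her hj herj). }
  apply (late_joiner_learns m r k ev sg M er IH hS0 hact hjoined Hann hev her hker); auto.
  intros j q hj. destruct (lt_eq_lt_dec j er) as [[h|h]|h]; auto; exfalso.
  - subst j. congruence.
  - eauto.
Qed.

End AdmissibleExecution.

Theorem lemma6 (S0 : list Node) (sched : nat -> Step) (T : nat -> R)
  (D alpha Delta gamma : R) (Nmin : nat) :
  0 < D ->
  0 <= alpha -> alpha <= 1 - Rpower 2 (- (1 / 4)) ->
  0 <= Delta -> Delta < 1 ->
  1 < ((1 - alpha) ^ 3 - Delta * (1 + alpha) ^ 3) * INR Nmin ->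
  gamma >= 1 / (INR Nmin * (1 - alpha) ^ 3)
           + (1 + Delta) * (1 + alpha) ^ 3 / (1 - alpha) ^ 3 - 1 ->
  time_ok T ->
  (forall n, step_ok gamma S0 sched T D n) ->
  delivery_ok gamma S0 sched T D ->
  Nmin_ok gamma S0 sched T Nmin ->
  churn_ok gamma S0 sched T D alpha ->
  failures_ok gamma S0 sched T Delta ->
  forall (p : Node) (nj : nat) (t : R),
    ~ In p S0 ->
    joins_at gamma S0 sched p nj ->
    T nj <= t ->
    active_at gamma S0 sched T p t ->
    forall n, cut T t n ->
    forall ev, in_SysInfo gamma S0 sched T 0 (Rmax 0 (t - 2 * D)) ev ->
    In ev (changes (st (cfg gamma S0 sched n) p)).
Proof.
  intros HD Ha0 Ha1 Hd0 _ HNp Hg Htime Hstep Hdel HNmin Hchurn Hfail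
    p nj t _ Hjoin Hnj Hact n Hcut ev [k [[hk0 hkt] hev]].
  assert (hkn : T k + 2 * D < T n).
  { pose proof (T_pos T Htime k). destruct Hcut as [_ hc].
    unfold Rmax in hkt. destruct (Rle_dec 0 (t - 2 * D)); lra. }
  assert (hnjn : (nj < n)%nat) by (apply (cut_spec T Htime t n Hcut); auto).
  apply (informed_all S0 sched T D alpha Delta gamma Nmin HD Htime Hstep Hdel HNmin Hchurn Hfail
    Ha0 Ha1 Hd0 HNp Hg n p) with (k := k); auto.
  - apply (active_at_cut S0 sched T gamma Htime t p n Hcut). exact Hact.
  - right. apply (joined_mono gamma S0 sched (S nj) n p ltac:(lia)). apply Hjoin.
Qed.
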